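(* Let $\beta=(\beta_n)_{n\ge0}$ be a sequence of positive numbers with $\liminf_n\beta_n^{1/n}\ge1$. The following are equivalent: 1) every symbol $\phi$ with $\phi(0)=0$ induces a bounded composition operator $C_\phi$ on $H^2(\beta)$, and $\sup\{\|C_\phi\|:\phi \text{ symbol},\ \phi(0)=0\}<\infty$; 2) $\beta$ is essentially decreasing.
   Context: $H^2(\beta)$ is the Hilbert space of analytic functions $f(z)=\sum_{n\ge0}a_nz^n$ on the unit disk $\mathbb D$ with $\|f\|^2=\sum_{n\ge0}|a_n|^2\beta_n<\infty$. A symbol is a non-constant analytic map $\phi:\mathbb D\to\mathbb D$ and $C_\phi f=f\circ\phi$. $\beta$ is essentially decreasing if there is $C\ge1$ with $\beta_m\le C\beta_n$ for all $m\ge n\ge0$. *)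

From Stdlib Require Import Reals.
From Coquelicot Require Import Coquelicot.
Open Scope R_scope.

Definition in_disk (z : C) : Prop := Cmod z < 1.

Definition weight_ok (beta : nat -> R) : Prop :=
  (forall n, 0 < beta n) /\
  Rbar_le (Finite 1) (LimInf_seq (fun n => Rpower (beta n) (/ INR n))).

(* f(z) = sum a_n z^n belongs to H^2(beta), given by its Taylor coefficients a. *)
Definition inH2 (beta : nat -> R) (a : nat -> C) : Prop :=
  ex_series (fun n => (Cmod (a n)) ^ 2 * beta n).

Definition H2norm (beta : nat -> R) (a : nat -> C) : R :=
  sqrt (Series (fun n => (Cmod (a n)) ^ 2 * beta n)).

Definition analytic_on_disk (phi : C -> C) : Prop :=
  exists c : nat -> C, forall z, in_disk z -> is_pseries c z (phi z).

Definition symbol (phi : C -> C) : Prop :=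
  analytic_on_disk phi /\
  (forall z, in_disk z -> in_disk (phi z)) /\
  (exists z1 z2, in_disk z1 /\ in_disk z2 /\ phi z1 <> phi z2).

(* b is the Taylor coefficient sequence of f o phi on D, where f = sum a_n z^n. *)
Definition comp_coeffs (a : nat -> C) (phi : C -> C) (b : nat -> C) : Prop :=
  forall z, in_disk z ->
    exists w, is_pseries a (phi z) w /\ is_pseries b z w.

Definition Cphi_bounded_by (beta : nat -> R) (phi : C -> C) (M : R) : Prop :=
  forall a, inH2 beta a ->
    exists b, comp_coeffs a phi b /\ inH2 beta b /\
      H2norm beta b <= M * H2norm beta a.

Definition ess_decreasing (beta : nat -> R) : Prop :=
  exists K, 1 <= K /\ forall m n, (n <= m)%nat -> beta m <= K * beta n.

From Stdlib Require Import Reals Lra Lia Arith.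
From Coquelicot Require Import Coquelicot.
Open Scope R_scope.

(* Sufficiency rests on Littlewood's subordination principle, proved here
   at the level of Taylor coefficients.  Multiplication by a function
   bounded by one on the disk does not increase the dilated norms
   sum_k |d_k|^2 r^(2k), by the discrete Parseval identity on roots of unity.
   Writing f o phi by Horner's scheme a_0 + phi (a_1 + phi (...)) and using
   phi(0) = 0, the partial sums of |coefficients|^2 of f o phi are bounded
   by those of f; Abel summation extends this to any nonincreasing weight,
   and an essentially decreasing beta is within a factor K of the
   nonincreasing weight K min_(m <= n) beta_m.  Finally, the coefficient
   sequence so constructed is identified with the Taylor series of f o phi,
   using that point evaluations are bounded on H^2(beta).

   Necessity tests C_phi on z^n with phi(z) = (1 - 1/n) z + z^(k+1)/n:
   the coefficient of z^(n+k) in phi^n is (1 - 1/n)^(n-1) >= 1/3, so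
   beta_(n+k) <= 9 M^2 beta_n. *)


(** Finite sums [f 0 + ... + f n] in C, by structural recursion so that
    [ring] and [field] apply to them directly. *)
Fixpoint csum (f : nat -> C) (n : nat) : C :=
  match n with O => f O | S m => Cplus (csum f m) (f (S m)) end.

Lemma csum_sum_n f n : csum f n = sum_n f n.
Proof. induction n; simpl; [now rewrite sum_O|]. rewrite sum_Sn, IHn. reflexivity. Qed.

Lemma Re_csum f n : Re (csum f n) = sum_f_R0 (fun k => Re (f k)) n.
Proof. induction n; simpl; auto. rewrite <- IHn. reflexivity. Qed.

Lemma Im_csum f n : Im (csum f n) = sum_f_R0 (fun k => Im (f k)) n.
Proof. induction n; simpl; auto. rewrite <- IHn. reflexivity. Qed.

Lemma RtoC_sum f n : RtoC (sum_f_R0 f n) = csum (fun k => RtoC (f k)) n.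
Proof. induction n; simpl; auto. rewrite RtoC_plus, IHn. reflexivity. Qed.

Lemma csum_ext_loc f g n : (forall k, (k <= n)%nat -> f k = g k) -> csum f n = csum g n.
Proof. induction n; intros H; simpl; [apply H; lia|]. rewrite IHn, H; auto. Qed.

Lemma csum_mult_l c f n : csum (fun k => Cmult c (f k)) n = Cmult c (csum f n).
Proof. induction n; simpl; auto. rewrite IHn. ring. Qed.

Lemma csum_mult_r c f n : Cmult (csum f n) c = csum (fun k => Cmult (f k) c) n.
Proof. induction n; simpl; auto. rewrite <- IHn. ring. Qed.

Lemma csum_plus f g n : csum (fun k => Cplus (f k) (g k)) n = Cplus (csum f n) (csum g n).
Proof. induction n; simpl; auto. rewrite IHn. ring. Qed.

Lemma csum_conj f n : Cconj (csum f n) = csum (fun k => Cconj (f k)) n.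
Proof. induction n; simpl; auto. rewrite Cplus_conj, IHn. reflexivity. Qed.

Lemma csum_zero f n : (forall k, (k <= n)%nat -> f k = RtoC 0) -> csum f n = RtoC 0.
Proof. induction n; intros H; simpl; [apply H; lia|]. rewrite IHn, H; auto. ring. Qed.

Lemma csum_last f m : (forall k, (k < m)%nat -> f k = RtoC 0) -> csum f m = f m.
Proof. intros H. destruct m; [reflexivity|]. simpl. rewrite csum_zero; [ring|]. intros; apply H; lia. Qed.

Lemma csum_pick k n (X : C) :
  (k <= n)%nat -> csum (fun l => if Nat.eqb k l then X else RtoC 0) n = X.
Proof.
induction n; intros Hk; simpl.
- replace k with 0%nat by lia. reflexivity.
- destruct (Nat.eqb_spec k (S n)).
  + subst. rewrite csum_zero; [ring|]. intros j Hj. destruct (Nat.eqb_spec (S n) j); [lia|reflexivity].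
  + rewrite IHn by lia. ring.
Qed.

Lemma csum_swap (f : nat -> nat -> C) n m :
  csum (fun j => csum (fun k => f j k) n) m = csum (fun k => csum (fun j => f j k) m) n.
Proof. revert n. induction m; intros n; simpl; [reflexivity|]. rewrite IHm, <- csum_plus. reflexivity. Qed.

Lemma csum_shift f L : csum f (S L) = Cplus (f 0%nat) (csum (fun k => f (S k)) L).
Proof. induction L; simpl; [reflexivity|]. simpl in IHL. rewrite IHL. ring. Qed.

Lemma Cmod_csum_le f n : Cmod (csum f n) <= sum_f_R0 (fun k => Cmod (f k)) n.
Proof. induction n; simpl; [lra|]. eapply Rle_trans; [apply Cmod_triangle|lra]. Qed.

Lemma csum_split f L n : (L <= n)%nat ->
  Cminus (csum f n) (csum f L) = csum (fun k => if Nat.leb k L then RtoC 0 else f k) n.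
Proof.
intros H. induction H.
- rewrite (csum_zero (fun k => if Nat.leb k L then RtoC 0 else f k)); [ring|].
  intros k Hk. destruct (Nat.leb_spec k L); [reflexivity|lia].
- cbn [csum]. rewrite <- IHle. destruct (Nat.leb_spec (S m) L); [lia|]. ring.
Qed.

Lemma sum_mono_nonneg (f : nat -> R) m n :
  (forall k, 0 <= f k) -> (m <= n)%nat -> sum_f_R0 f m <= sum_f_R0 f n.
Proof. intros Hf H. induction H; [lra|]. simpl. specialize (Hf (S m0)). lra. Qed.

Lemma sum_split_R (f : nat -> R) L n : (L <= n)%nat ->
  sum_f_R0 f n - sum_f_R0 f L = sum_f_R0 (fun k => if Nat.leb k L then 0 else f k) n.
Proof.
intros H. induction H.
- rewrite (sum_eq (fun k => if Nat.leb k L then 0 else f k) (fun _ => 0) L), sum_cte; [ring|].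
  intros k Hk. destruct (Nat.leb_spec k L); [reflexivity|lia].
- cbn [sum_f_R0]. rewrite <- IHle. destruct (Nat.leb_spec (S m) L); [lia|]. ring.
Qed.

Lemma sum_only0 (f : nat -> R) K : (forall k, (0 < k)%nat -> f k = 0) -> sum_f_R0 f K = f 0%nat.
Proof. intros H. induction K; simpl; auto. rewrite IHK, (H (S K)) by lia. ring. Qed.

Lemma abel_summation (x b : nat -> R) K :
  sum_f_R0 (fun k => x k * b k) K =
  sum_f_R0 (fun j => (b j - b (S j)) * sum_f_R0 x j) K + b (S K) * sum_f_R0 x K.
Proof. induction K; simpl; [ring|]. rewrite IHK. ring. Qed.

Lemma le_of_le_plus_small (u v C : R) :
  0 <= C -> (forall x, 0 < x <= 1 -> u <= v + C * x) -> u <= v.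
Proof.
intros HC H. apply Rle_plus_epsilon. intros eps He.
set (x := Rmin 1 (eps / (C + 1))).
assert (Hx : 0 < x <= 1).
{ split; [apply Rmin_glb_lt; [lra|apply Rdiv_lt_0_compat; lra]|apply Rmin_l]. }
assert (Cx : C * x <= eps).
{ assert (Hx' : x <= eps / (C + 1)) by apply Rmin_r.
  apply (Rmult_le_compat_r (C + 1)) in Hx'; [|lra].
  unfold Rdiv in Hx'. rewrite Rmult_assoc, Rinv_l in Hx' by lra. nra. }
specialize (H x Hx). lra.
Qed.

Lemma Im_le_Cmod c : Rabs (Im c) <= Cmod c.
Proof.
pose proof (Rmax_Cmod c). destruct c as [x y]. simpl in *.
eapply Rle_trans; [apply Rmax_r|exact H].
Qed.

Lemma Cmod_le_Re_Im c : Cmod c <= Rabs (Re c) + Rabs (Im c).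
Proof.
destruct c as [x y]. unfold Cmod. simpl.
pose proof (Rabs_pos x). pose proof (Rabs_pos y).
rewrite <- (sqrt_Rsqr (Rabs x + Rabs y)) by lra.
apply sqrt_le_1_alt. unfold Rsqr.
assert (x * (x * 1) = Rabs x * Rabs x) by (rewrite <- Rabs_mult, Rabs_right; [ring|nra]).
assert (y * (y * 1) = Rabs y * Rabs y) by (rewrite <- Rabs_mult, Rabs_right; [ring|nra]).
nra.
Qed.

Lemma is_series_C (a : nat -> C) (l : C) :
  is_series a l <->
  is_series (fun k => Re (a k)) (Re l) /\ is_series (fun k => Im (a k)) (Im l).
Proof.
unfold is_series.
(* The real instance of [filterlim_locally], usable as a rewrite rule. *)
assert (Hloc : forall (v : nat -> R) (m : R), filterlim (sum_n v) eventually (locally m) <->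
          forall eps : posreal, eventually (fun n => ball m eps (sum_n v n)))
  by (intros; apply filterlim_locally).
rewrite (filterlim_locally (F:=eventually) (sum_n a) l), !Hloc. split.
- intros H. split; intros eps; destruct (H eps) as [N HN]; exists N; intros n Hn;
    destruct (HN n Hn) as [H1 H2]; rewrite <- csum_sum_n in H1, H2;
    rewrite sum_n_Reals; [rewrite <- Re_csum|rewrite <- Im_csum]; assumption.
- intros [H1 H2] eps. destruct (H1 eps) as [N1 HN1]; destruct (H2 eps) as [N2 HN2].
  exists (max N1 N2). intros n Hn.
  specialize (HN1 n ltac:(lia)). specialize (HN2 n ltac:(lia)).
  rewrite sum_n_Reals, <- Re_csum, csum_sum_n in HN1.
  rewrite sum_n_Reals, <- Im_csum, csum_sum_n in HN2.
  split; assumption.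
Qed.

Lemma is_series_C_unique (u : nat -> C) l1 l2 : is_series u l1 -> is_series u l2 -> l1 = l2.
Proof. exact (filterlim_locally_unique _ _ _). Qed.

Lemma is_series_fin (u : nat -> C) N :
  (forall k, (N < k)%nat -> u k = RtoC 0) -> is_series u (csum u N).
Proof.
intros H. apply (proj2 (filterlim_locally (F:=eventually) (sum_n u) _)).
intros eps. exists N. intros n Hn.
replace (sum_n u n) with (csum u N); [apply ball_center|].
rewrite <- csum_sum_n. induction Hn; [reflexivity|].
simpl. rewrite H, <- IHHn by lia. ring.
Qed.

Lemma is_series_fin_R (u : nat -> R) N :
  (forall k, (N < k)%nat -> u k = 0) -> is_series u (sum_f_R0 u N).
Proof.
intros H. apply (proj2 (filterlim_locally (F:=eventually) (sum_n u) _)).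
intros eps. exists N. intros n Hn.
replace (sum_n u n) with (sum_f_R0 u N); [apply ball_center|].
rewrite sum_n_Reals. induction Hn; [reflexivity|].
simpl. rewrite H, IHHn by lia. ring.
Qed.

Lemma series_partial_conv (w : nat -> R) W : is_series w W ->
  forall eps, 0 < eps -> exists N, forall n, (N <= n)%nat -> Rabs (sum_f_R0 w n - W) < eps.
Proof.
intros H eps He.
assert (Hl : is_lim_seq (fun n => sum_f_R0 w n) W).
{ eapply is_lim_seq_ext; [|exact H]. intros n. apply sum_n_Reals. }
apply is_lim_seq_spec in Hl. destruct (Hl (mkposreal eps He)) as [N HN].
exists N. intros n Hn. apply (HN n Hn).
Qed.

Lemma csum_conv_C (u : nat -> C) U : is_series u U ->
  forall eps, 0 < eps -> exists N, forall n, (N <= n)%nat -> Cmod (Cminus (csum u n) U) < eps.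
Proof.
intros H eps He. apply is_series_C in H as [H1 H2].
destruct (series_partial_conv _ _ H1 (eps/2) ltac:(lra)) as [N1 HN1].
destruct (series_partial_conv _ _ H2 (eps/2) ltac:(lra)) as [N2 HN2].
exists (max N1 N2). intros n Hn. specialize (HN1 n ltac:(lia)). specialize (HN2 n ltac:(lia)).
rewrite <- Re_csum in HN1. rewrite <- Im_csum in HN2.
eapply Rle_lt_trans; [apply Cmod_le_Re_Im|].
replace (Re (Cminus (csum u n) U)) with (Re (csum u n) - Re U)
  by (destruct U; destruct (csum u n); simpl; ring).
replace (Im (Cminus (csum u n) U)) with (Im (csum u n) - Im U)
  by (destruct U; destruct (csum u n); simpl; ring).
lra.
Qed.

Lemma lim_bound_C (u : nat -> C) U c B L : is_series u U ->
  (forall n, (L <= n)%nat -> Cmod (Cminus (csum u n) c) <= B) -> Cmod (Cminus U c) <= B.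
Proof.
intros H HB. apply (le_of_le_plus_small _ _ 1); [lra|]. intros eps He.
destruct (csum_conv_C u U H eps (proj1 He)) as [N HN].
specialize (HN (max L N) ltac:(lia)). specialize (HB (max L N) ltac:(lia)).
set (P := csum u (max L N)) in *.
replace (Cminus U c) with (Cplus (Copp (Cminus P U)) (Cminus P c)) by ring.
eapply Rle_trans; [apply Cmod_triangle|]. rewrite Cmod_opp. lra.
Qed.

Lemma series_partial_le (w : nat -> R) W : (forall k, 0 <= w k) -> is_series w W ->
  forall n, sum_f_R0 w n <= W.
Proof.
intros Hw H n. apply Rnot_lt_le. intros Hlt.
destruct (series_partial_conv w W H (sum_f_R0 w n - W) ltac:(lra)) as [N HN].
specialize (HN (max n N) ltac:(lia)).
pose proof (sum_mono_nonneg w n (max n N) Hw ltac:(lia)).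
rewrite Rabs_right in HN; lra.
Qed.

Lemma term_le_series (w : nat -> R) W : (forall k, 0 <= w k) -> is_series w W ->
  forall k, w k <= W.
Proof.
intros Hw H k. eapply Rle_trans; [|apply (series_partial_le w W Hw H k)].
destruct k; simpl; [lra|]. pose proof (cond_pos_sum w k (fun i => Hw i)). lra.
Qed.

Lemma series_le_bound (w : nat -> R) W B :
  is_series w W -> (forall n, sum_f_R0 w n <= B) -> W <= B.
Proof.
intros H HB. apply Rnot_lt_le. intros Hlt.
destruct (series_partial_conv w W H (W - B) ltac:(lra)) as [N HN].
specialize (HN N (le_n N)). specialize (HB N). apply Rabs_def2 in HN. lra.
Qed.

Lemma bounded_ex_series (w : nat -> R) B :
  (forall k, 0 <= w k) -> (forall n, sum_f_R0 w n <= B) -> ex_series w.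
Proof.
intros Hw HB.
destruct (ex_finite_lim_seq_incr (fun n => sum_f_R0 w n) B) as [l Hl]; auto.
- intros n. simpl. specialize (Hw (S n)). lra.
- exists l. eapply is_lim_seq_ext in Hl; [exact Hl|]. intros n. simpl. rewrite sum_n_Reals. reflexivity.
Qed.

Lemma tail_C (u : nat -> C) U (w : nat -> R) W L : is_series u U -> is_series w W ->
  (forall k, Cmod (u k) <= w k) -> Cmod (Cminus U (csum u L)) <= W - sum_f_R0 w L.
Proof.
intros Hu Hw Hle. apply (lim_bound_C u U _ _ L Hu). intros n Hn.
assert (Hw0 : forall k, 0 <= w k) by (intros k; eapply Rle_trans; [apply Cmod_ge_0|apply Hle]).
pose proof (series_partial_le w W Hw0 Hw n).
rewrite csum_split by auto.
eapply Rle_trans; [apply Cmod_csum_le|].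
assert (sum_f_R0 (fun k => Cmod (if Nat.leb k L then RtoC 0 else u k)) n
        <= sum_f_R0 w n - sum_f_R0 w L).
{ rewrite sum_split_R by auto. apply sum_Rle. intros k _.
  destruct (Nat.leb k L); [rewrite Cmod_0; lra|apply Hle]. }
lra.
Qed.

Lemma series_terms_bounded (u : nat -> C) l : is_series u l -> exists M, forall n, Cmod (u n) <= M.
Proof.
intros H. destruct (filterlim_bounded (sum_n u) (ex_intro _ l H)) as [M HM].
exists (2 * M). intros n.
assert (HM' : forall m, Cmod (csum u m) <= M) by (intros m; rewrite csum_sum_n; apply HM).
pose proof (Rle_trans _ _ _ (Cmod_ge_0 _) (HM' 0%nat)).
destruct n as [|n]; [specialize (HM' 0%nat); simpl in HM'; lra|].
replace (u (S n)) with (Cminus (csum u (S n)) (csum u n)) by (simpl; ring).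
eapply Rle_trans; [apply Cmod_triangle|]. rewrite Cmod_opp.
pose proof (HM' n). pose proof (HM' (S n)). lra.
Qed.

Definition conv (a b : nat -> C) (n : nat) : C := csum (fun k => Cmult (a k) (b (n - k)%nat)) n.

Lemma ex_series_Rabs_of_Cmod (a : nat -> C) (f : C -> R) :
  (forall c, Rabs (f c) <= Cmod c) ->
  ex_series (fun n => Cmod (a n)) -> ex_series (fun n => Rabs (f (a n))).
Proof.
intros Hf H. apply (ex_series_le (V:=R_CompleteNormedModule) _ (fun n => Cmod (a n))); auto.
intros n. change (norm (Rabs (f (a n)))) with (Rabs (Rabs (f (a n)))). rewrite Rabs_Rabsolu. apply Hf.
Qed.

Lemma is_series_conv (a b : nat -> C) la lb :
  is_series a la -> is_series b lb ->
  ex_series (fun n => Cmod (a n)) -> ex_series (fun n => Cmod (b n)) ->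
  is_series (conv a b) (Cmult la lb).
Proof.
intros Ha Hb Aa Ab.
apply is_series_C in Ha as [Har Hai]. apply is_series_C in Hb as [Hbr Hbi].
pose proof (ex_series_Rabs_of_Cmod a Re re_le_Cmod Aa) as Aar.
pose proof (ex_series_Rabs_of_Cmod a Im Im_le_Cmod Aa) as Aai.
pose proof (ex_series_Rabs_of_Cmod b Re re_le_Cmod Ab) as Abr.
pose proof (ex_series_Rabs_of_Cmod b Im Im_le_Cmod Ab) as Abi.
pose proof (is_series_mult _ _ _ _ Har Hbr Aar Abr) as M1.
pose proof (is_series_mult _ _ _ _ Hai Hbi Aai Abi) as M2.
pose proof (is_series_mult _ _ _ _ Har Hbi Aar Abi) as M3.
pose proof (is_series_mult _ _ _ _ Hai Hbr Aai Abr) as M4.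
set (RR := fun n => sum_f_R0 (fun k => Re (a k) * Re (b (n - k)%nat)) n).
set (II := fun n => sum_f_R0 (fun k => Im (a k) * Im (b (n - k)%nat)) n).
set (RI := fun n => sum_f_R0 (fun k => Re (a k) * Im (b (n - k)%nat)) n).
set (IR := fun n => sum_f_R0 (fun k => Im (a k) * Re (b (n - k)%nat)) n).
apply is_series_C; split.
- apply (is_series_ext (fun n => RR n - II n)).
  + intros n. unfold RR, II, conv. rewrite Re_csum, <- minus_sum.
    apply sum_eq. intros i _. destruct (a i), (b (n-i)%nat). simpl. ring.
  + exact (is_series_minus _ _ _ _ M1 M2).
- apply (is_series_ext (fun n => RI n + IR n)).
  + intros n. unfold RI, IR, conv. rewrite Im_csum, <- plus_sum.
    apply sum_eq. intros i _. destruct (a i), (b (n-i)%nat). simpl. ring.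
  + exact (is_series_plus _ _ _ _ M3 M4).
Qed.

Definition pterm (d : nat -> C) (z : C) (k : nat) : C := Cmult (Cpow z k) (d k).

Definition disk_pseries (d : nat -> C) (h : C -> C) : Prop :=
  forall z, Cmod z < 1 -> is_series (pterm d z) (h z).

Lemma pow_n_Cpow (z : C) k : pow_n z k = Cpow z k.
Proof. induction k; simpl; try rewrite IHk; reflexivity. Qed.

Lemma is_pseries_pterm d z l : is_pseries d z l <-> is_series (pterm d z) l.
Proof.
unfold is_pseries. split; apply is_series_ext; intros n; unfold pterm;
  rewrite <- pow_n_Cpow; reflexivity.
Qed.

Lemma Cmod_pterm d z k : Cmod (pterm d z k) = Cmod (d k) * Cmod z ^ k.
Proof. unfold pterm. rewrite Cmod_mult, Cmod_pow. ring. Qed.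

(* Convergence on the disk is absolute: compare with a geometric series
   on a slightly larger circle. *)
Lemma disk_pseries_abs d h z : disk_pseries d h -> Cmod z < 1 ->
  ex_series (fun k => Cmod (d k) * Cmod z ^ k).
Proof.
intros H Hz. set (rho := (1 + Cmod z) / 2).
assert (Hr : Cmod z < rho < 1) by (unfold rho; lra).
assert (Hr0 : 0 < rho) by (pose proof (Cmod_ge_0 z); lra).
assert (Hrc : Cmod (RtoC rho) < 1) by (rewrite Cmod_R, Rabs_right; lra).
destruct (series_terms_bounded _ _ (H _ Hrc)) as [M HM].
assert (Hq : 0 <= Cmod z / rho < 1).
{ split; [apply Rmult_le_pos; [apply Cmod_ge_0|left; apply Rinv_0_lt_compat; lra]|].
  apply (Rmult_lt_reg_r rho); [lra|]. unfold Rdiv. rewrite Rmult_assoc, Rinv_l; lra. }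
apply (ex_series_le (V:=R_CompleteNormedModule) _ (fun k => M * (Cmod z / rho) ^ k)).
- intros n. change (norm (Cmod (d n) * Cmod z ^ n)) with (Rabs (Cmod (d n) * Cmod z ^ n)).
  rewrite Rabs_right by (apply Rle_ge, Rmult_le_pos; [apply Cmod_ge_0|apply pow_le, Cmod_ge_0]).
  specialize (HM n). rewrite Cmod_pterm, Cmod_R, Rabs_right in HM by lra.
  assert (0 < rho ^ n) by (apply pow_lt; lra).
  assert (0 <= (Cmod z / rho) ^ n) by (apply pow_le; lra).
  replace (Cmod (d n) * Cmod z ^ n) with ((Cmod (d n) * rho ^ n) * (Cmod z / rho) ^ n)
    by (unfold Rdiv; rewrite Rpow_mult_distr, pow_inv; field; lra).
  apply Rmult_le_compat_r; auto.
- apply (ex_series_scal_l (V:=R_NormedModule) M). apply ex_series_geom. rewrite Rabs_right; lra.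
Qed.

Lemma disk_pseries_ext c d f g : (forall k, c k = d k) ->
  (forall z, Cmod z < 1 -> f z = g z) -> disk_pseries c f -> disk_pseries d g.
Proof.
intros H1 H2 H z Hz. rewrite <- H2 by auto. eapply is_series_ext; [|apply (H z Hz)].
intros n; unfold pterm; rewrite H1; reflexivity.
Qed.

Lemma disk_pseries_plus c f d g : disk_pseries c f -> disk_pseries d g ->
  disk_pseries (fun k => Cplus (c k) (d k)) (fun z => Cplus (f z) (g z)).
Proof.
intros Hc Hd z Hz. eapply is_series_ext; [|exact (is_series_plus _ _ _ _ (Hc z Hz) (Hd z Hz))].
intros n. unfold pterm. simpl. change plus with Cplus. ring.
Qed.

Lemma disk_pseries_scal a c f : disk_pseries c f ->
  disk_pseries (fun k => Cmult a (c k)) (fun z => Cmult a (f z)).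
Proof.
intros Hc z Hz. eapply is_series_ext; [|exact (is_series_scal_l a _ _ (Hc z Hz))].
intros n. unfold pterm. simpl. change scal with Cmult.
change (@Hierarchy.mult C_AbsRing) with Cmult. ring.
Qed.

Lemma disk_pseries_mult c f d g : disk_pseries c f -> disk_pseries d g ->
  disk_pseries (conv c d) (fun z => Cmult (f z) (g z)).
Proof.
intros Hc Hd z Hz.
assert (A1 : ex_series (fun k => Cmod (pterm c z k))).
{ eapply ex_series_ext; [|apply (disk_pseries_abs c f z Hc Hz)]. intros; rewrite Cmod_pterm; reflexivity. }
assert (A2 : ex_series (fun k => Cmod (pterm d z k))).
{ eapply ex_series_ext; [|apply (disk_pseries_abs d g z Hd Hz)]. intros; rewrite Cmod_pterm; reflexivity. }
eapply is_series_ext; [|exact (is_series_conv _ _ _ _ (Hc z Hz) (Hd z Hz) A1 A2)].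
intros n. unfold conv, pterm. rewrite <- csum_mult_l. apply csum_ext_loc. intros k Hk.
replace n with (k + (n - k))%nat at 3 by lia. rewrite Cpow_add_r. ring.
Qed.

Definition const_seq (a : C) (k : nat) : C := if Nat.eqb k 0 then a else RtoC 0.

Lemma disk_pseries_const a : disk_pseries (const_seq a) (fun _ => a).
Proof.
intros z Hz. replace a with (csum (pterm (const_seq a) z) 0) at 2
  by (simpl; unfold pterm, const_seq; simpl; ring).
apply is_series_fin. intros k Hk. unfold pterm, const_seq. destruct k; [lia|]. simpl. ring.
Qed.

Definition monomial (m : nat) (j : nat) : C := if Nat.eqb j m then RtoC 1 else RtoC 0.

Lemma disk_pseries_monomial m : disk_pseries (monomial m) (fun z => Cpow z m).
Proof.
intros z Hz. replace (Cpow z m) with (csum (pterm (monomial m) z) m).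
- apply is_series_fin. intros k Hk. unfold pterm, monomial. destruct (Nat.eqb_spec k m); [lia|ring].
- rewrite csum_last.
  + unfold pterm, monomial. rewrite Nat.eqb_refl. ring.
  + intros k Hk. unfold pterm, monomial. destruct (Nat.eqb_spec k m); [lia|ring].
Qed.

Lemma disk_pseries_coeff_bound e h : disk_pseries e h ->
  exists B, forall k, Cmod (e k) <= B * 2 ^ k.
Proof.
intros H.
assert (Hh : Cmod (RtoC (1/2)) = 1/2) by (rewrite Cmod_R, Rabs_right; lra).
destruct (disk_pseries_abs e h (RtoC (1/2)) H ltac:(rewrite Hh; lra)) as [B HB].
rewrite Hh in HB.
assert (Hw0 : forall k, 0 <= Cmod (e k) * (1/2) ^ k)
  by (intros k; apply Rmult_le_pos; [apply Cmod_ge_0|apply pow_le; lra]).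
exists B. intros k. pose proof (term_le_series _ _ Hw0 HB k) as HT.
replace (Cmod (e k)) with (Cmod (e k) * (1/2) ^ k * 2 ^ k)
  by (rewrite Rmult_assoc, <- Rpow_mult_distr; replace (1/2*2) with 1 by field; rewrite pow1; ring).
apply Rmult_le_compat_r; [apply pow_le; lra|exact HT].
Qed.

Lemma pseries_leading_term e B m x V :
  0 < x <= 1/4 -> (forall k, Cmod (e k) <= B * 2 ^ k) ->
  (forall i, (i < m)%nat -> e i = RtoC 0) -> is_series (pterm e (RtoC x)) V ->
  Cmod (Cminus V (Cmult (e m) (RtoC (x ^ m)))) <= 2 * B * (2 * x) ^ (S m).
Proof.
intros Hx Hb Hlow HV.
assert (S0 : 0 <= B) by (pose proof (Rle_trans _ _ _ (Cmod_ge_0 _) (Hb 0%nat)); simpl in *; lra).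
assert (Hxc : Cmod (RtoC x) = x) by (rewrite Cmod_R, Rabs_right; lra).
assert (Hg : is_series (fun k => B * (2 * x) ^ k) (B * / (1 - 2 * x))).
{ apply (is_series_scal_l (V:=R_NormedModule) B), is_series_geom. rewrite Rabs_right; lra. }
assert (Hle : forall k, Cmod (pterm e (RtoC x) k) <= B * (2 * x) ^ k).
{ intros k. rewrite Cmod_pterm, Hxc, Rpow_mult_distr.
  specialize (Hb k). assert (0 <= x ^ k) by (apply pow_le; lra). nra. }
pose proof (tail_C _ _ _ _ m HV Hg Hle) as T.
rewrite csum_last in T by (intros k Hk; unfold pterm; rewrite Hlow by auto; ring).
unfold pterm in T. rewrite Cmult_comm, <- RtoC_pow in T.
replace (sum_f_R0 (fun k => B * (2 * x) ^ k) m) with (B * ((1 - (2 * x) ^ S m) / (1 - 2 * x))) in T.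
- eapply Rle_trans; [exact T|].
  replace (B * / (1 - 2 * x) - B * ((1 - (2 * x) ^ S m) / (1 - 2 * x)))
    with (B * (2 * x) ^ S m / (1 - 2 * x)) by (field; lra).
  assert (0 <= B * (2 * x) ^ S m) by (apply Rmult_le_pos; [lra|apply pow_le; lra]).
  apply (Rmult_le_reg_r (1 - 2 * x)); [lra|].
  unfold Rdiv. rewrite Rmult_assoc, Rinv_l by lra. nra.
- rewrite (sum_eq _ (fun k => (2 * x) ^ k * B)) by (intros; ring).
  rewrite <- scal_sum. f_equal. change (pow (2 * x)) with (fun n => (2 * x) ^ n). pose proof (GP_finite (2 * x) m) as G.
  replace (m + 1)%nat with (S m) in G by lia.
  apply (Rmult_eq_reg_r (2 * x - 1)); [|lra]. rewrite G. field. lra.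
Qed.

Lemma disk_pseries_zero e : disk_pseries e (fun _ => RtoC 0) -> forall m, e m = RtoC 0.
Proof.
intros H. destruct (disk_pseries_coeff_bound e _ H) as [B HB].
assert (B0 : 0 <= B) by (pose proof (Rle_trans _ _ _ (Cmod_ge_0 _) (HB 0%nat)); simpl in *; lra).
intros m. induction m as [m IH] using (well_founded_induction lt_wf).
apply Cmod_eq_0, Rle_antisym; [|apply Cmod_ge_0].
apply (le_of_le_plus_small _ _ (2 ^ m * B)); [apply Rmult_le_pos; [apply pow_le|]; lra|].
intros y Hy. set (x := y / 4).
assert (Hx : 0 < x <= 1/4) by (unfold x; lra).
assert (Hxc : Cmod (RtoC x) < 1) by (rewrite Cmod_R, Rabs_right; lra).
pose proof (pseries_leading_term e B m x _ Hx HB IH (H _ Hxc)) as T.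
replace (Cminus (RtoC 0) (Cmult (e m) (RtoC (x ^ m)))) with (Copp (Cmult (e m) (RtoC (x ^ m)))) in T
  by ring.
rewrite Cmod_opp, Cmod_mult, Cmod_R, Rabs_right in T by (apply Rle_ge, pow_le; lra).
assert (Hxm : 0 < x ^ m) by (apply pow_lt; lra).
apply (Rmult_le_reg_r (x ^ m)); [exact Hxm|].
eapply Rle_trans; [exact T|].
replace (2 * B * (2 * x) ^ S m) with ((2 ^ m * B * (4 * x)) * x ^ m)
  by (rewrite Rpow_mult_distr; simpl; ring).
unfold x. replace (4 * (y / 4)) with y by field. lra.
Qed.

Lemma disk_pseries_unique d d' g : disk_pseries d g -> disk_pseries d' g -> forall k, d k = d' k.
Proof.
intros H1 H2 k.
assert (Hm1 : RtoC (-1) = Copp (RtoC 1)) by (unfold RtoC, Copp; simpl; f_equal; ring).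
assert (H3 : disk_pseries (fun k => Cplus (d k) (Cmult (RtoC (-1)) (d' k))) (fun _ => RtoC 0)).
{ eapply disk_pseries_ext;
    [| |apply (disk_pseries_plus _ _ _ _ H1 (disk_pseries_scal (RtoC (-1)) _ _ H2))].
  - intros; reflexivity.
  - intros z _. simpl. rewrite Hm1. ring. }
pose proof (disk_pseries_zero _ H3 k) as E. rewrite Hm1 in E.
replace (d k) with (Cplus (Cplus (d k) (Cmult (Copp (RtoC 1)) (d' k))) (d' k)) by ring.
rewrite E. ring.
Qed.

Lemma disk_pseries_at_0 c phi : disk_pseries c phi -> c 0%nat = phi (RtoC 0).
Proof.
intros H. assert (Hz : Cmod (RtoC 0) < 1) by (rewrite Cmod_0; lra).
apply (is_series_C_unique (pterm c (RtoC 0))); [|apply H; auto].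
replace (c 0%nat) with (csum (pterm c (RtoC 0)) 0) by (simpl; unfold pterm; simpl; ring).
apply is_series_fin. intros k Hk. unfold pterm. destruct k; [lia|]. simpl. ring.
Qed.

(** Roots of unity and the discrete Parseval identity. *)

Definition unit_root (N : nat) : C := (cos (2 * PI / INR N), sin (2 * PI / INR N)).

Lemma unit_root_pow N d :
  Cpow (unit_root N) d = (cos (INR d * (2 * PI / INR N)), sin (INR d * (2 * PI / INR N))).
Proof.
induction d.
- simpl. rewrite Rmult_0_l, cos_0, sin_0. reflexivity.
- rewrite Cpow_S, IHd. unfold unit_root. rewrite S_INR.
  replace ((INR d + 1) * (2 * PI / INR N)) with (2 * PI / INR N + INR d * (2 * PI / INR N)) by ring.
  rewrite cos_plus, sin_plus. unfold Cmult. simpl. f_equal; ring.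
Qed.

Lemma unit_root_pow_N N : (0 < N)%nat -> Cpow (unit_root N) N = RtoC 1.
Proof.
intros HN. rewrite unit_root_pow.
replace (INR N * (2 * PI / INR N)) with (2 * PI) by (field; apply not_0_INR; lia).
rewrite cos_2PI, sin_2PI. reflexivity.
Qed.

Lemma unit_root_pow_neq1 N d : (0 < d < N)%nat -> Cpow (unit_root N) d <> RtoC 1.
Proof.
intros Hd Heq. rewrite unit_root_pow in Heq. unfold RtoC in Heq. injection Heq as H1 H2.
set (x := INR d * (2 * PI / INR N)) in *.
assert (Hd0 : 0 < INR d) by (apply lt_0_INR; lia).
assert (HdN : INR d < INR N) by (apply lt_INR; lia).
pose proof PI_RGT_0.
assert (Hx : 0 < x / 2 < PI).
{ replace (x / 2) with (PI * (INR d / INR N)) by (unfold x; field; lra).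
  split; [apply Rmult_lt_0_compat; [lra|apply Rdiv_lt_0_compat; lra]|].
  rewrite <- (Rmult_1_r PI) at 2. apply Rmult_lt_compat_l; [lra|].
  apply (Rmult_lt_reg_r (INR N)); [lra|]. unfold Rdiv. rewrite Rmult_assoc, Rinv_l; lra. }
pose proof (sin_gt_0 _ (proj1 Hx) (proj2 Hx)).
replace x with (2 * (x / 2)) in H1 by field. rewrite cos_2a_sin in H1. nra.
Qed.

Lemma Cmod_unit_root_pow N d : Cmod (Cpow (unit_root N) d) = 1.
Proof.
rewrite unit_root_pow. unfold Cmod. simpl. transitivity (sqrt 1); [f_equal|apply sqrt_1].
pose proof (sin2_cos2 (INR d * (2 * PI / INR N))) as H. unfold Rsqr in H. nra.
Qed.

Lemma unit_root_pow_nz N d : Cpow (unit_root N) d <> RtoC 0.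
Proof. intros H. pose proof (Cmod_unit_root_pow N d). rewrite H, Cmod_0 in H0. lra. Qed.

Lemma Cmult_cancel_l (w x y : C) : w <> RtoC 0 -> Cmult w x = Cmult w y -> x = y.
Proof.
intros Hw E. apply (f_equal (fun t => Cmult (Cinv w) t)) in E.
rewrite !Cmult_assoc, Cinv_l, !Cmult_1_l in E by auto. exact E.
Qed.

Lemma unit_root_pow_inj N k l : (k < N)%nat -> (l < N)%nat ->
  Cpow (unit_root N) k = Cpow (unit_root N) l -> k = l.
Proof.
intros Hk Hl E. destruct (lt_eq_lt_dec k l) as [[H|H]|H]; auto; exfalso.
- apply (unit_root_pow_neq1 N (l - k)); [lia|].
  replace l with (k + (l - k))%nat in E by lia. rewrite Cpow_add_r in E.
  symmetry. apply (Cmult_cancel_l (Cpow (unit_root N) k)); [apply unit_root_pow_nz|].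
  rewrite <- E. ring.
- apply (unit_root_pow_neq1 N (k - l)); [lia|].
  replace k with (l + (k - l))%nat in E by lia. rewrite Cpow_add_r in E.
  symmetry. apply (Cmult_cancel_l (Cpow (unit_root N) l)); [apply unit_root_pow_nz|].
  rewrite E. ring.
Qed.

Lemma geom_csum (z : C) n :
  Cmult (Cminus z 1) (csum (fun j => Cpow z j) n) = Cminus (Cpow z (S n)) 1.
Proof. induction n; simpl; [ring|]. rewrite Cmult_plus_distr_l, IHn. simpl. ring. Qed.

Lemma geom_sum_root (z : C) n :
  Cpow z (S n) = RtoC 1 -> z <> RtoC 1 -> csum (fun j => Cpow z j) n = RtoC 0.
Proof.
intros H1 H2.
assert (Hz : Cminus z 1 <> RtoC 0) by (intros E; apply H2, Ceq_minus, E).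
apply (Cmult_cancel_l (Cminus z 1)); auto. rewrite geom_csum, H1. ring.
Qed.

Definition root_ratio (N k l : nat) : C :=
  Cmult (Cpow (unit_root N) k) (Cconj (Cpow (unit_root N) l)).

Lemma root_ratio_pow_N N k l : (0 < N)%nat -> Cpow (root_ratio N k l) N = RtoC 1.
Proof.
intros HN. unfold root_ratio. rewrite Cpow_mult_l, <- Cpow_conj, <- !Cpow_mult_r.
rewrite (Nat.mul_comm k N), (Nat.mul_comm l N), !Cpow_mult_r, unit_root_pow_N, !Cpow_1_l by auto.
replace (Cconj (RtoC 1)) with (RtoC 1) by (unfold Cconj, RtoC; simpl; f_equal; ring). ring.
Qed.

Lemma root_ratio_diag N k : root_ratio N k k = RtoC 1.
Proof. unfold root_ratio. rewrite <- Cmod2_conj, Cmod_unit_root_pow. simpl. f_equal. ring. Qed.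

Lemma root_ratio_neq1 N k l : (k < N)%nat -> (l < N)%nat -> k <> l -> root_ratio N k l <> RtoC 1.
Proof.
intros Hk Hl Hkl E. apply Hkl, (unit_root_pow_inj N); auto.
unfold root_ratio in E. apply (f_equal (fun w => Cmult w (Cpow (unit_root N) l))) in E.
rewrite <- Cmult_assoc, (Cmult_comm (Cconj _)), <- Cmod2_conj, Cmod_unit_root_pow, Cmult_1_l in E.
rewrite <- E. simpl. unfold Cmult. destruct (Cpow (unit_root N) k). simpl. f_equal; ring.
Qed.

Lemma root_orthogonality N k l : (k < S N)%nat -> (l < S N)%nat ->
  csum (fun j => Cpow (root_ratio (S N) k l) j) N =
  if Nat.eqb k l then RtoC (INR (S N)) else RtoC 0.
Proof.
intros Hk Hl. destruct (Nat.eqb_spec k l).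
- subst. rewrite root_ratio_diag. clear. induction N; [simpl; ring|].
  simpl csum. rewrite IHN, Cpow_1_l, (S_INR (S N)), RtoC_plus. ring.
- apply geom_sum_root; [apply root_ratio_pow_N; lia|apply root_ratio_neq1; auto].
Qed.

Lemma discrete_parseval (e : nat -> C) (r : R) (L : nat) :
  sum_f_R0 (fun j => Cmod (csum (pterm e (Cmult (RtoC r) (Cpow (unit_root (S L)) j))) L) ^ 2) L
  = INR (S L) * sum_f_R0 (fun k => Cmod (e k) ^ 2 * r ^ (2 * k)) L.
Proof.
apply RtoC_inj.
set (w := unit_root (S L)).
set (u := fun k => Cmult (e k) (RtoC (r ^ k))).
assert (Hpoly : forall j, csum (pterm e (Cmult (RtoC r) (Cpow w j))) L =
                          csum (fun k => Cmult (u k) (Cpow (Cpow w k) j)) L).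
{ intros j. apply csum_ext_loc. intros k _. unfold pterm, u.
  rewrite Cpow_mult_l, <- RtoC_pow, <- !Cpow_mult_r, Nat.mul_comm. ring. }
rewrite RtoC_sum.
transitivity (csum (fun j => csum (fun k => csum (fun l =>
  Cmult (Cmult (u k) (Cconj (u l))) (Cpow (root_ratio (S L) k l) j)) L) L) L).
{ apply csum_ext_loc. intros j _. rewrite Hpoly, Cmod2_conj, csum_conj, csum_mult_r.
  apply csum_ext_loc. intros k _. rewrite <- csum_mult_l. apply csum_ext_loc. intros l _.
  unfold root_ratio. rewrite Cpow_mult_l, <- Cpow_conj, Cmult_conj. fold w.
  rewrite <- !Cpow_mult_r, (Nat.mul_comm l j), (Nat.mul_comm k j). ring. }
rewrite csum_swap.
transitivity (csum (fun k => Cmult (Cmult (u k) (Cconj (u k))) (RtoC (INR (S L)))) L).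
{ apply csum_ext_loc. intros k Hk. rewrite csum_swap.
  rewrite <- (csum_pick k L (Cmult (Cmult (u k) (Cconj (u k))) (RtoC (INR (S L))))) by auto.
  apply csum_ext_loc. intros l Hl.
  rewrite csum_mult_l, root_orthogonality by lia.
  destruct (Nat.eqb_spec k l); [subst; reflexivity|ring]. }
rewrite RtoC_mult, RtoC_sum, Cmult_comm, csum_mult_r. apply csum_ext_loc. intros k _.
rewrite <- Cmod2_conj. unfold u. rewrite Cmod_mult, Cmod_R, RtoC_mult.
f_equal. rewrite <- RtoC_mult. f_equal.
rewrite Rpow_mult_distr, pow2_abs, <- pow_mult, (Nat.mul_comm k 2). reflexivity.
Qed.

Lemma disk_pseries_partial_bound d h r : disk_pseries d h -> 0 <= r < 1 ->
  exists SD, 0 <= SD /\ forall L z, Cmod z = r -> Cmod (csum (pterm d z) L) <= SD.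
Proof.
intros Hd Hr.
assert (Hrc : Cmod (RtoC r) = r) by (rewrite Cmod_R, Rabs_right; lra).
destruct (disk_pseries_abs d h (RtoC r) Hd ltac:(lra)) as [SD HSD]. rewrite Hrc in HSD.
assert (Hw0 : forall k, 0 <= Cmod (d k) * r ^ k)
  by (intros k; apply Rmult_le_pos; [apply Cmod_ge_0|apply pow_le; lra]).
exists SD. split; [eapply Rle_trans; [apply (Hw0 0%nat)|apply (term_le_series _ _ Hw0 HSD)]|].
intros L z Hz. eapply Rle_trans; [apply Cmod_csum_le|].
eapply Rle_trans; [|apply (series_partial_le _ _ Hw0 HSD L)].
apply sum_Rle. intros k _. rewrite Cmod_pterm, Hz. lra.
Qed.

Lemma disk_pseries_partial_uniform d h r : disk_pseries d h -> 0 <= r < 1 ->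
  forall e, 0 < e -> exists L0, forall L z, (L0 <= L)%nat -> Cmod z = r ->
    Cmod (Cminus (h z) (csum (pterm d z) L)) < e.
Proof.
intros Hd Hr e He.
assert (Hrc : Cmod (RtoC r) = r) by (rewrite Cmod_R, Rabs_right; lra).
destruct (disk_pseries_abs d h (RtoC r) Hd ltac:(lra)) as [SD HSD]. rewrite Hrc in HSD.
assert (Hw0 : forall k, 0 <= Cmod (d k) * r ^ k)
  by (intros k; apply Rmult_le_pos; [apply Cmod_ge_0|apply pow_le; lra]).
destruct (series_partial_conv _ _ HSD e He) as [L0 HL0].
exists L0. intros L z HL Hz.
eapply Rle_lt_trans.
- apply (tail_C _ _ _ _ L (Hd z ltac:(lra)) HSD). intros k. rewrite Cmod_pterm, Hz. lra.
- specialize (HL0 L HL). pose proof (series_partial_le _ _ Hw0 HSD L).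
  rewrite Rabs_left1 in HL0 by lra. lra.
Qed.

Lemma square_le_of_close (p q SD e : R) :
  0 <= p -> 0 <= q <= SD -> 0 < e <= 1 -> p <= q + 2 * e -> p ^ 2 <= q ^ 2 + (4 * SD + 4) * e.
Proof. intros Hp Hq He H. assert (p ^ 2 <= (q + 2 * e) ^ 2) by (apply pow_incr; lra). nra. Qed.

(* Multiplication by [phi] with [|phi| <= 1] on the disk is a contraction
   for the dilated norm of radius [r]: compare the values on [L+1] equally
   spaced points of the circle and apply the discrete Parseval identity. *)
Lemma mult_contraction c phi d h r B :
  disk_pseries c phi -> (forall z, Cmod z < 1 -> Cmod (phi z) <= 1) ->
  disk_pseries d h -> 0 <= r < 1 ->
  (forall L, sum_f_R0 (fun k => Cmod (d k) ^ 2 * r ^ (2 * k)) L <= B) ->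
  forall K, sum_f_R0 (fun k => Cmod (conv c d k) ^ 2 * r ^ (2 * k)) K <= B.
Proof.
intros Hc Hphi Hd Hr HB K.
set (G := conv c d).
assert (HG : disk_pseries G (fun z => Cmult (phi z) (h z))) by (apply disk_pseries_mult; auto).
destruct (disk_pseries_partial_bound d h r Hd Hr) as [SD [SD0 HSD]].
apply (le_of_le_plus_small _ _ (4 * SD + 4)); [lra|]. intros e He.
destruct (disk_pseries_partial_uniform G _ r HG Hr e ltac:(lra)) as [L1 HL1].
destruct (disk_pseries_partial_uniform d h r Hd Hr e ltac:(lra)) as [L2 HL2].
set (L := max K (max L1 L2)).
set (x := fun j => Cmult (RtoC r) (Cpow (unit_root (S L)) j)).
assert (Hpt : forall j, Cmod (csum (pterm G (x j)) L) ^ 2 <=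
                        Cmod (csum (pterm d (x j)) L) ^ 2 + (4 * SD + 4) * e).
{ intros j.
  assert (Hxr : Cmod (x j) = r)
    by (unfold x; rewrite Cmod_mult, Cmod_unit_root_pow, Cmod_R, Rabs_right; lra).
  specialize (HL1 L (x j) ltac:(lia) Hxr). specialize (HL2 L (x j) ltac:(lia) Hxr).
  specialize (HSD L (x j) Hxr).
  set (PG := csum (pterm G (x j)) L) in *. set (Pd := csum (pterm d (x j)) L) in *.
  set (v := h (x j)) in *.
  assert (A1 : Cmod PG <= Cmod (Cmult (phi (x j)) v) + e).
  { replace PG with (Cminus (Cmult (phi (x j)) v) (Cminus (Cmult (phi (x j)) v) PG)) by ring.
    eapply Rle_trans; [unfold Cminus at 1; apply Cmod_triangle|]. rewrite Cmod_opp. lra. }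
  assert (A2 : Cmod (Cmult (phi (x j)) v) <= Cmod v).
  { rewrite Cmod_mult. pose proof (Hphi (x j) ltac:(lra)). pose proof (Cmod_ge_0 v). nra. }
  assert (A3 : Cmod v <= Cmod Pd + e).
  { replace v with (Cplus Pd (Cminus v Pd)) by ring.
    eapply Rle_trans; [apply Cmod_triangle|lra]. }
  apply square_le_of_close; [apply Cmod_ge_0|split; [apply Cmod_ge_0|exact HSD]|lra|lra]. }
assert (Hsum := sum_Rle _ _ L (fun j _ => Hpt j)).
rewrite plus_sum, sum_cte in Hsum. unfold x in Hsum. rewrite !discrete_parseval in Hsum.
assert (HN : 0 < INR (S L)) by (apply lt_0_INR; lia).
assert (sum_f_R0 (fun k => Cmod (G k) ^ 2 * r ^ (2 * k)) L <=
        sum_f_R0 (fun k => Cmod (d k) ^ 2 * r ^ (2 * k)) L + (4 * SD + 4) * e)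
  by (apply (Rmult_le_reg_l (INR (S L))); [auto|lra]).
specialize (HB L).
assert (sum_f_R0 (fun k => Cmod (G k) ^ 2 * r ^ (2 * k)) K <=
        sum_f_R0 (fun k => Cmod (G k) ^ 2 * r ^ (2 * k)) L)
  by (apply sum_mono_nonneg; [intros k; apply Rmult_le_pos; [apply pow2_ge_0|apply pow_le; lra]|lia]).
lra.
Qed.

(** Littlewood's subordination principle, at the level of coefficients. *)

(* [horner c a L] is the coefficient sequence of [a_0 + a_1 phi + ... + a_L phi^L],
   where [c] are the coefficients of [phi], computed by Horner's scheme
   [a_0 + phi (a_1 + phi (a_2 + ...))]. *)
Fixpoint horner (c a : nat -> C) (L : nat) : nat -> C :=
  match L with
  | O => const_seq (a O)
  | S L' => fun k => Cplus (const_seq (a O) k) (conv c (horner c (fun n => a (S n)) L') k)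
  end.

Lemma disk_pseries_horner c phi : disk_pseries c phi ->
  forall L a, disk_pseries (horner c a L) (fun z => csum (pterm a (phi z)) L).
Proof.
intros Hc L. induction L; intros a; cbn [horner].
- eapply disk_pseries_ext; [| |apply disk_pseries_const]; [reflexivity|].
  intros z _. unfold pterm. simpl. ring.
- eapply disk_pseries_ext;
    [| |apply (disk_pseries_plus _ _ _ _ (disk_pseries_const (a O)) (disk_pseries_mult _ _ _ _ Hc (IHL (fun n => a (S n)))))];
    [reflexivity|].
  intros z _. cbv beta. rewrite csum_shift, <- csum_mult_l. f_equal; [unfold pterm; simpl; ring|].
  apply csum_ext_loc. intros k _. unfold pterm. simpl. ring.
Qed.

Definition zero_fixing_symbol (c : nat -> C) (phi : C -> C) : Prop :=
  disk_pseries c phi /\ (forall z, Cmod z < 1 -> Cmod (phi z) <= 1) /\ c 0%nat = RtoC 0.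

Lemma conv_0 c d : c 0%nat = RtoC 0 -> conv c d 0 = RtoC 0.
Proof. intros H. unfold conv. simpl. rewrite H. ring. Qed.

(* Dilated subordination: peel off one Horner layer at a time; each layer
   adds [|a_0|^2] in degree zero (since [phi(0) = 0]) and applies the
   multiplication contraction. *)
Lemma horner_dilated_bound c phi : zero_fixing_symbol c phi ->
  forall L a r, 0 <= r < 1 -> forall K,
  sum_f_R0 (fun k => Cmod (horner c a L k) ^ 2 * r ^ (2 * k)) K <= sum_f_R0 (fun n => Cmod (a n) ^ 2) L.
Proof.
intros [Hc [Hphi Hc0]] L. induction L; intros a r Hr K.
- simpl horner. rewrite sum_only0.
  + unfold const_seq. simpl. lra.
  + intros k Hk. unfold const_seq. destruct k; [lia|]. simpl. rewrite Cmod_0. ring.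
- simpl horner. set (D := horner c (fun n => a (S n)) L).
  assert (E : forall k, Cmod (Cplus (const_seq (a 0%nat) k) (conv c D k)) ^ 2 * r ^ (2 * k) =
     (if Nat.eqb k 0 then Cmod (a 0%nat) ^ 2 else 0) + Cmod (conv c D k) ^ 2 * r ^ (2 * k)).
  { intros k. unfold const_seq. destruct k; simpl.
    - rewrite conv_0, Cmod_0 by auto. replace (Cplus (a 0%nat) (RtoC 0)) with (a 0%nat) by ring. ring.
    - replace (Cplus (RtoC 0) (conv c D (S k))) with (conv c D (S k)) by ring. ring. }
  rewrite (sum_eq _ _ K (fun k _ => E k)), plus_sum.
  rewrite sum_only0 by (intros k Hk; destruct k; [lia|reflexivity]). simpl Nat.eqb. cbv iota.
  rewrite (decomp_sum (fun n => Cmod (a n) ^ 2) (S L)) by lia. simpl Init.Nat.pred.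
  apply Rplus_le_compat_l.
  apply (mult_contraction c phi D (fun z => csum (pterm (fun n => a (S n)) (phi z)) L) r); auto.
  + apply disk_pseries_horner; auto.
  + intros L'. apply IHL; auto.
Qed.

Lemma bernoulli_ineq t n : 0 <= t <= 1 -> 1 - INR n * t <= (1 - t) ^ n.
Proof.
intros Ht. induction n; [simpl; lra|].
rewrite S_INR. simpl. assert (0 <= (1 - t) ^ n) by (apply pow_le; lra).
assert (0 <= INR n) by apply pos_INR. nra.
Qed.

Lemma pow_decr_exp r m n : 0 <= r <= 1 -> (m <= n)%nat -> r ^ n <= r ^ m.
Proof. intros Hr H. induction H; [lra|]. simpl. assert (0 <= r ^ m0) by (apply pow_le; lra). nra. Qed.

(* Littlewood's subordination for polynomials: the H^2 norm of
   [a_0 + ... + a_L phi^L] is at most that of [a_0 + ... + a_L z^L]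
   (let the dilation radius tend to one). *)
Lemma horner_bound c phi : zero_fixing_symbol c phi -> forall L a K,
  sum_f_R0 (fun k => Cmod (horner c a L k) ^ 2) K <= sum_f_R0 (fun n => Cmod (a n) ^ 2) L.
Proof.
intros Hs L a K.
set (S := sum_f_R0 (fun k => Cmod (horner c a L k) ^ 2) K).
assert (S0 : 0 <= S) by (apply cond_pos_sum; intros; apply pow2_ge_0).
apply (le_of_le_plus_small _ _ (INR (2 * K) * S)); [pose proof (pos_INR (2 * K)); nra|].
intros d Hd.
pose proof (horner_dilated_bound c phi Hs L a (1 - d) ltac:(lra) K) as H.
enough ((1 - INR (2 * K) * d) * S <= sum_f_R0 (fun k => Cmod (horner c a L k) ^ 2 * (1 - d) ^ (2 * k)) K)
  by lra.
unfold S. rewrite scal_sum. apply sum_Rle. intros k Hk.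
assert (1 - INR (2 * K) * d <= (1 - d) ^ (2 * k)).
{ eapply Rle_trans; [apply (bernoulli_ineq d (2 * K)); lra|].
  apply pow_decr_exp; [lra|lia]. }
pose proof (pow2_ge_0 (Cmod (horner c a L k))). nra.
Qed.

Fixpoint cpow_coeffs (c : nat -> C) (n : nat) : nat -> C :=
  match n with O => const_seq (RtoC 1) | S m => conv c (cpow_coeffs c m) end.

Lemma disk_pseries_cpow c phi : disk_pseries c phi ->
  forall n, disk_pseries (cpow_coeffs c n) (fun z => Cpow (phi z) n).
Proof.
intros H n. induction n; simpl.
- apply (disk_pseries_const (RtoC 1)).
- apply (disk_pseries_mult _ _ _ _ H IHn).
Qed.

Lemma conv_plus_r c d1 d2 n :
  conv c (fun k => Cplus (d1 k) (d2 k)) n = Cplus (conv c d1 n) (conv c d2 n).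
Proof. unfold conv. rewrite <- csum_plus. apply csum_ext_loc. intros. ring. Qed.

Lemma conv_scal_r c s d n : conv c (fun k => Cmult s (d k)) n = Cmult s (conv c d n).
Proof. unfold conv. rewrite <- csum_mult_l. apply csum_ext_loc. intros. ring. Qed.

Lemma conv_plus_l c1 c2 d n :
  conv (fun k => Cplus (c1 k) (c2 k)) d n = Cplus (conv c1 d n) (conv c2 d n).
Proof. unfold conv. rewrite <- csum_plus. apply csum_ext_loc. intros. ring. Qed.

Lemma conv_scal_l s c d n : conv (fun k => Cmult s (c k)) d n = Cmult s (conv c d n).
Proof. unfold conv. rewrite <- csum_mult_l. apply csum_ext_loc. intros. ring. Qed.

Lemma conv_ext_r c d1 d2 n : (forall k, (k <= n)%nat -> d1 k = d2 k) -> conv c d1 n = conv c d2 n.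
Proof. intros H. unfold conv. apply csum_ext_loc. intros k Hk. rewrite H by lia. reflexivity. Qed.

Lemma conv_const_r c x n : conv c (const_seq x) n = Cmult (c n) x.
Proof.
unfold conv. rewrite <- (csum_pick n n (Cmult (c n) x)) by lia.
apply csum_ext_loc. intros k Hk. unfold const_seq.
destruct (Nat.eqb_spec (n - k) 0); destruct (Nat.eqb_spec n k); try lia; [subst; reflexivity|ring].
Qed.

Lemma conv_monomial_l m d i :
  conv (monomial m) d i = if Nat.leb m i then d (i - m)%nat else RtoC 0.
Proof.
unfold conv. destruct (Nat.leb_spec m i).
- rewrite <- (csum_pick m i (d (i - m)%nat)) by auto. apply csum_ext_loc. intros l Hl.
  unfold monomial. destruct (Nat.eqb_spec l m); destruct (Nat.eqb_spec m l); try lia; [subst; ring|ring].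
- apply csum_zero. intros l Hl. unfold monomial. destruct (Nat.eqb_spec l m); [lia|ring].
Qed.

Lemma horner_succ c a L k :
  horner c a (S L) k = Cplus (horner c a L k) (Cmult (a (S L)) (cpow_coeffs c (S L) k)).
Proof.
revert a k. induction L; intros a k.
- simpl. rewrite !conv_const_r. ring.
- change (horner c a (S (S L)) k)
    with (Cplus (const_seq (a O) k) (conv c (horner c (fun n => a (S n)) (S L)) k)).
  rewrite (conv_ext_r c _ (fun j => Cplus (horner c (fun n => a (S n)) L j)
                                          (Cmult (a (S (S L))) (cpow_coeffs c (S L) j))))
    by (intros j _; apply IHL).
  rewrite conv_plus_r, conv_scal_r. simpl. ring.
Qed.

Lemma cpow_coeffs_low c n k : c 0%nat = RtoC 0 -> (k < n)%nat -> cpow_coeffs c n k = RtoC 0.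
Proof.
intros Hc0. revert k. induction n; intros k Hk; [lia|].
simpl. unfold conv. apply csum_zero. intros i Hi. destruct i.
- rewrite Hc0. ring.
- rewrite IHn by lia. ring.
Qed.

Lemma horner_stable c a L L' k : c 0%nat = RtoC 0 -> (L <= L')%nat -> (k <= L)%nat ->
  horner c a L' k = horner c a L k.
Proof.
intros Hc0 H Hk. induction H; [reflexivity|].
rewrite horner_succ, IHle, cpow_coeffs_low by (auto; lia). ring.
Qed.

Lemma horner_ext c a a' L k : (forall n, (n <= L)%nat -> a n = a' n) -> horner c a L k = horner c a' L k.
Proof.
revert a a' k. induction L; intros a a' k H; simpl.
- rewrite H by lia. reflexivity.
- rewrite H by lia. f_equal. apply conv_ext_r. intros j _. apply IHL. intros n Hn. apply H. lia.
Qed.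

Lemma horner_minus c a a' L k :
  horner c (fun n => Cminus (a n) (a' n)) L k = Cminus (horner c a L k) (horner c a' L k).
Proof.
assert (Hm1 : RtoC (-1) = Copp (RtoC 1)) by (unfold RtoC, Copp; simpl; f_equal; ring).
revert a a' k. induction L; intros a a' k; simpl.
- unfold const_seq. destruct (Nat.eqb k 0); ring.
- rewrite (conv_ext_r c _ (fun j => Cplus (horner c (fun n => a (S n)) L j)
                                         (Cmult (RtoC (-1)) (horner c (fun n => a' (S n)) L j)))).
  + rewrite conv_plus_r, conv_scal_r, Hm1. unfold const_seq. destruct (Nat.eqb k 0); ring.
  + intros j _. rewrite (IHL (fun n => a (S n)) (fun n => a' (S n))), Hm1. ring.
Qed.

Lemma horner_levels c x L L' k : (forall n, (L < n)%nat -> x n = RtoC 0) -> (L <= L')%nat ->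
  horner c x L' k = horner c x L k.
Proof. intros Hx H. induction H; [reflexivity|]. rewrite horner_succ, IHle, Hx by lia. ring. Qed.

(* The coefficients of [f o phi]: the [k]-th one is reached after [k] steps. *)
Definition subst_coeffs (c a : nat -> C) (k : nat) : C := horner c a k k.

Lemma subst_coeffs_horner c a k L : c 0%nat = RtoC 0 -> (k <= L)%nat ->
  subst_coeffs c a k = horner c a L k.
Proof. intros. unfold subst_coeffs. symmetry. apply horner_stable; auto. Qed.

Definition truncate (L : nat) (a : nat -> C) (n : nat) : C := if Nat.leb n L then a n else RtoC 0.

Lemma horner_subst_truncate c a L k : c 0%nat = RtoC 0 ->
  horner c a L k = subst_coeffs c (truncate L a) k.
Proof.
intros Hc0. unfold subst_coeffs. destruct (le_lt_dec k L) as [H|H].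
- rewrite (horner_ext c (truncate L a) a k k); [apply horner_stable; auto|].
  intros n Hn. unfold truncate. destruct (Nat.leb_spec n L); auto; lia.
- rewrite (horner_levels c (truncate L a) L k k); [|intros n Hn|lia].
  + apply horner_ext. intros n Hn. unfold truncate. destruct (Nat.leb_spec n L); auto; lia.
  + unfold truncate. destruct (Nat.leb_spec n L); auto; lia.
Qed.

Lemma subst_minus_horner c a L k : c 0%nat = RtoC 0 ->
  Cminus (subst_coeffs c a k) (horner c a L k) =
  subst_coeffs c (fun n => Cminus (a n) (truncate L a n)) k.
Proof. intros Hc0. rewrite horner_subst_truncate by auto. unfold subst_coeffs. rewrite horner_minus. reflexivity. Qed.

Lemma subst_partial_H2 c phi a j : zero_fixing_symbol c phi ->
  sum_f_R0 (fun k => Cmod (subst_coeffs c a k) ^ 2) j <= sum_f_R0 (fun n => Cmod (a n) ^ 2) j.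
Proof.
intros Hs. pose proof Hs as [_ [_ Hc0]].
rewrite (sum_eq _ (fun k => Cmod (horner c a j k) ^ 2))
  by (intros k Hk; rewrite (subst_coeffs_horner c a k j) by auto; reflexivity).
apply (horner_bound c phi); auto.
Qed.

(* By Abel summation the same holds for every nonincreasing nonnegative weight. *)
Lemma subst_partial_weighted c phi a (b : nat -> R) K : zero_fixing_symbol c phi ->
  (forall n, 0 <= b n) -> (forall n, b (S n) <= b n) ->
  sum_f_R0 (fun k => Cmod (subst_coeffs c a k) ^ 2 * b k) K <=
  sum_f_R0 (fun n => Cmod (a n) ^ 2 * b n) K.
Proof.
intros Hs Hb0 Hb. rewrite !(abel_summation _ b). apply Rplus_le_compat.
- apply sum_Rle. intros j _. apply Rmult_le_compat_l; [specialize (Hb j); lra|].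
  apply (subst_partial_H2 c phi); auto.
- apply Rmult_le_compat_l; auto. apply (subst_partial_H2 c phi); auto.
Qed.

Lemma weight_dual_summable beta : weight_ok beta ->
  forall x, 0 <= x < 1 -> ex_series (fun n => x ^ n / beta n).
Proof.
intros [Hpos Hlim] x Hx.
set (u := fun n => Rpower (beta n) (/ INR n)).
set (rho := (1 + x) / 2).
assert (Hr : x < rho < 1) by (unfold rho; lra).
assert (HN : exists N, forall n, (N <= n)%nat -> rho < u n).
{ pose proof (proj2_sig (ex_LimInf_seq u)) as HL. fold (LimInf_seq u) in HL.
  change (Rbar_le (Finite 1) (LimInf_seq u)) in Hlim.
  destruct (LimInf_seq u) as [l| |]; simpl in Hlim, HL; [|destruct (HL rho) as [N HN]; exists N; auto|contradiction].
  destruct (HL (mkposreal (l - rho) ltac:(lra))) as [_ [N HN]].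
  exists N. intros n Hn. specialize (HN n Hn). simpl in HN. lra. }
destruct HN as [N HN].
assert (Hq : 0 <= x / rho < 1).
{ split; [apply Rmult_le_pos; [lra|left; apply Rinv_0_lt_compat; lra]|].
  apply (Rmult_lt_reg_r rho); [lra|]. unfold Rdiv. rewrite Rmult_assoc, Rinv_l; lra. }
apply (ex_series_incr_n _ (S N)).
apply (ex_series_le (V:=R_CompleteNormedModule) _ (fun k => (x / rho) ^ (S N + k))).
- intros k. change (norm (x ^ (S N + k) / beta (S N + k)%nat)) with (Rabs (x ^ (S N + k) / beta (S N + k)%nat)).
  set (n := (S N + k)%nat).
  assert (Hb : 0 < beta n) by apply Hpos.
  assert (Hbn : rho ^ n < beta n).
  { rewrite <- Rpower_pow by lra.
    replace (beta n) with (Rpower (u n) (INR n)).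
    - apply Rlt_Rpower_l; [apply lt_0_INR; unfold n; lia|]. split; [lra|apply HN; unfold n; lia].
    - unfold u. rewrite Rpower_mult, Rinv_l; [apply Rpower_1; auto|apply not_0_INR; unfold n; lia]. }
  assert (0 < rho ^ n) by (apply pow_lt; lra).
  assert (0 <= x ^ n) by (apply pow_le; lra).
  rewrite Rabs_right by (apply Rle_ge; unfold Rdiv; apply Rmult_le_pos; [lra|left; apply Rinv_0_lt_compat; lra]).
  unfold Rdiv. rewrite Rpow_mult_distr, pow_inv. apply Rmult_le_compat_l; auto.
  apply Rinv_le_contravar; lra.
- apply (ex_series_incr_n (fun k => (x / rho) ^ k) (S N)). apply ex_series_geom.
  rewrite Rabs_right; lra.
Qed.

Lemma amgm_weighted (u v b t : R) : 0 < b -> 0 < t -> u * v <= (t * (u ^ 2 * b) + v ^ 2 / (t * b)) / 2.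
Proof.
intros Hb Ht. assert (0 < t * b) by nra.
assert (0 <= (t * b * u - v) ^ 2) by apply pow2_ge_0.
apply (Rmult_le_reg_r (2 * (t * b))); [nra|].
replace ((t * (u ^ 2 * b) + v ^ 2 / (t * b)) / 2 * (2 * (t * b))) with ((t * b * u) ^ 2 + v ^ 2)
  by (field; lra).
nra.
Qed.

(* Point evaluation at [|z| < 1] is bounded on [H^2(beta)]: a
   Cauchy-Schwarz estimate in AM-GM form, with a free parameter [t]. *)
Lemma H2_partial_eval_bound beta (e : nat -> C) z Z t n :
  (forall k, 0 < beta k) -> 0 < t ->
  is_series (fun k => (Cmod z ^ 2) ^ k / beta k) Z ->
  Cmod (csum (pterm e z) n) <= t / 2 * sum_f_R0 (fun k => Cmod (e k) ^ 2 * beta k) n + Z / (2 * t).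
Proof.
intros Hpos Ht HZ.
assert (z0 : forall k, 0 <= (Cmod z ^ 2) ^ k / beta k).
{ intros k. unfold Rdiv. apply Rmult_le_pos; [apply pow_le, pow2_ge_0|left; apply Rinv_0_lt_compat; auto]. }
eapply Rle_trans; [apply Cmod_csum_le|].
eapply Rle_trans.
{ apply (sum_Rle _ (fun k => (t * (Cmod (e k) ^ 2 * beta k) + (Cmod z ^ 2) ^ k / (t * beta k)) / 2)).
  intros k _. rewrite Cmod_pterm, <- pow_mult, Nat.mul_comm, pow_mult. apply amgm_weighted; auto. }
replace (sum_f_R0 (fun k => (t * (Cmod (e k) ^ 2 * beta k) + (Cmod z ^ 2) ^ k / (t * beta k)) / 2) n)
  with (t / 2 * sum_f_R0 (fun k => Cmod (e k) ^ 2 * beta k) n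
        + / (2 * t) * sum_f_R0 (fun k => (Cmod z ^ 2) ^ k / beta k) n).
- pose proof (series_partial_le _ _ z0 HZ n).
  assert (0 < / (2 * t)) by (apply Rinv_0_lt_compat; lra).
  replace (Z / (2 * t)) with (/ (2 * t) * Z) by (field; lra). nra.
- rewrite !scal_sum, <- plus_sum. apply sum_eq. intros k _. field.
  split; [apply Rgt_not_eq, Hpos|lra].
Qed.

Lemma inH2_abs_summable beta a : weight_ok beta -> inH2 beta a -> forall x, 0 <= x < 1 ->
  ex_series (fun n => Cmod (a n) * x ^ n).
Proof.
intros Hw Ha x Hx.
assert (Hg := weight_dual_summable beta Hw (x ^ 2) ltac:(split; [apply pow_le; lra|nra])).
destruct Hw as [Hpos _].
apply (ex_series_le (V:=R_CompleteNormedModule) _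
         (fun n => (Cmod (a n) ^ 2 * beta n + (x ^ 2) ^ n / beta n) / 2)).
- intros n. change (norm (Cmod (a n) * x ^ n)) with (Rabs (Cmod (a n) * x ^ n)).
  rewrite Rabs_right by (apply Rle_ge, Rmult_le_pos; [apply Cmod_ge_0|apply pow_le; lra]).
  pose proof (amgm_weighted (Cmod (a n)) (x ^ n) (beta n) 1 (Hpos n) Rlt_0_1) as H.
  rewrite <- pow_mult, Nat.mul_comm, pow_mult. rewrite !Rmult_1_l in H. exact H.
- apply (ex_series_scal_r (/2)). apply (ex_series_plus (V:=R_NormedModule)); auto.
Qed.

Lemma inH2_pseries beta a w : weight_ok beta -> inH2 beta a -> Cmod w < 1 ->
  exists W, is_series (pterm a w) W.
Proof.
intros Hw Ha Hz.
apply (ex_series_le (V:=C_CompleteNormedModule) _ (fun n => Cmod (a n) * Cmod w ^ n)).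
- intros n. change (norm (pterm a w n)) with (Cmod (pterm a w n)). rewrite Cmod_pterm. lra.
- exact (inH2_abs_summable beta a Hw Ha (Cmod w) (conj (Cmod_ge_0 w) Hz)).
Qed.

(** Sufficiency: for an essentially decreasing weight every symbol fixing
    the origin induces a composition operator of norm at most [sqrt K]. *)

Fixpoint running_min (beta : nat -> R) (n : nat) : R :=
  match n with O => beta O | S m => Rmin (running_min beta m) (beta (S m)) end.

Lemma running_min_le beta n : running_min beta n <= beta n.
Proof. destruct n; simpl; [lra|apply Rmin_r]. Qed.

Lemma running_min_decr beta n : running_min beta (S n) <= running_min beta n.
Proof. simpl. apply Rmin_l. Qed.

Lemma running_min_attained beta n : exists m, (m <= n)%nat /\ running_min beta n = beta m.
Proof.
induction n as [|n [m [Hm E]]]; [exists 0%nat; split; auto|].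
simpl. unfold Rmin. destruct (Rle_dec (running_min beta n) (beta (S n))).
- exists m; split; auto.
- exists (S n); split; auto.
Qed.

Lemma symbol_coeffs phi : symbol phi -> phi (RtoC 0) = RtoC 0 ->
  exists c, zero_fixing_symbol c phi.
Proof.
intros [[c Hc] [Hin _]] H0. exists c.
assert (HPS : disk_pseries c phi) by (intros z Hz; apply is_pseries_pterm, Hc, Hz).
split; [exact HPS|split].
- intros z Hz. specialize (Hin z Hz). unfold in_disk in Hin. lra.
- rewrite (disk_pseries_at_0 c phi HPS). exact H0.
Qed.

Section EssentiallyDecreasing.

Variables (beta : nat -> R) (K0 : R).
Hypothesis beta_ok : weight_ok beta.
Hypothesis beta_ess_decr : forall m n, (n <= m)%nat -> beta m <= K0 * beta n.

Let beta_pos : forall n, 0 < beta n := proj1 beta_ok.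

Lemma ess_decr_const_ge1 : 1 <= K0.
Proof.
pose proof (beta_ess_decr 0 0 (le_n 0)). pose proof (beta_pos 0).
apply (Rmult_le_reg_r (beta 0%nat)); lra.
Qed.

(* Composition with [phi] multiplies the weighted partial sums by at most
   [K0]: [beta] lies between the nonincreasing weight [K0 * running_min beta]
   and [1/K0] times it. *)
Lemma subst_weighted_bound c phi : zero_fixing_symbol c phi -> forall (x : nat -> C) n,
  sum_f_R0 (fun k => Cmod (subst_coeffs c x k) ^ 2 * beta k) n <=
  K0 * sum_f_R0 (fun k => Cmod (x k) ^ 2 * beta k) n.
Proof.
intros Hs x n. pose proof ess_decr_const_ge1 as HK.
set (bp := fun n => K0 * running_min beta n).
assert (Hbbp : forall n, beta n <= bp n).
{ intros m. destruct (running_min_attained beta m) as [m' [Hm E]]. unfold bp. rewrite E. auto. }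
eapply Rle_trans; [apply sum_Rle; intros k _; apply Rmult_le_compat_l; [apply pow2_ge_0|apply Hbbp]|].
eapply Rle_trans; [apply (subst_partial_weighted c phi x bp n Hs)|].
- intros m. pose proof (Hbbp m). pose proof (beta_pos m). lra.
- intros m. unfold bp. pose proof (running_min_decr beta m). nra.
- rewrite scal_sum. apply sum_Rle. intros k _. unfold bp.
  assert (0 <= Cmod (x k) ^ 2 * K0) by (apply Rmult_le_pos; [apply pow2_ge_0|lra]).
  pose proof (running_min_le beta k). nra.
Qed.

Lemma subst_inH2 c phi a : zero_fixing_symbol c phi -> inH2 beta a ->
  inH2 beta (subst_coeffs c a) /\
  H2norm beta (subst_coeffs c a) <= sqrt K0 * H2norm beta a.
Proof.
intros Hs [SA HSA]. pose proof ess_decr_const_ge1 as HK.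
assert (g0 : forall (x : nat -> C) k, 0 <= Cmod (x k) ^ 2 * beta k)
  by (intros x k; apply Rmult_le_pos; [apply pow2_ge_0|left; auto]).
assert (HB : forall n, sum_f_R0 (fun k => Cmod (subst_coeffs c a k) ^ 2 * beta k) n <= K0 * SA).
{ intros n. eapply Rle_trans; [apply (subst_weighted_bound c phi Hs)|].
  apply Rmult_le_compat_l; [lra|]. apply (series_partial_le _ _ (g0 a) HSA). }
assert (Hb : inH2 beta (subst_coeffs c a)) by (apply (bounded_ex_series _ (K0 * SA)); auto).
assert (SA0 : 0 <= SA) by exact (Rle_trans _ _ _ (g0 a 0%nat) (term_le_series _ _ (g0 a) HSA 0)).
split; [exact Hb|]. unfold H2norm.
rewrite (is_series_unique _ _ HSA), <- sqrt_mult by lra.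
apply sqrt_le_1_alt, (series_le_bound _ _ _ (Series_correct _ Hb) HB).
Qed.

Lemma truncation_tail_bound (a : nat -> C) SA L n :
  is_series (fun k => Cmod (a k) ^ 2 * beta k) SA ->
  sum_f_R0 (fun k => Cmod (Cminus (a k) (truncate L a k)) ^ 2 * beta k) n <=
  SA - sum_f_R0 (fun k => Cmod (a k) ^ 2 * beta k) L.
Proof.
intros HSA. set (g := fun k => Cmod (a k) ^ 2 * beta k).
assert (g0 : forall k, 0 <= g k) by (intros k; apply Rmult_le_pos; [apply pow2_ge_0|left; apply beta_pos]).
rewrite (sum_eq _ (fun k => if Nat.leb k L then 0 else g k)).
- eapply Rle_trans; [apply (sum_mono_nonneg _ n (max n L)); [|lia]|].
  + intros k. destruct (Nat.leb k L); [lra|apply g0].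
  + rewrite <- sum_split_R by lia. pose proof (series_partial_le g SA g0 HSA (max n L)). lra.
- intros k _. unfold truncate, g. destruct (Nat.leb k L).
  + replace (Cminus (a k) (a k)) with (RtoC 0) by ring. rewrite Cmod_0. ring.
  + replace (Cminus (a k) (RtoC 0)) with (a k) by ring. reflexivity.
Qed.

Lemma subst_value_approx c phi a SA z V Z L t :
  zero_fixing_symbol c phi -> is_series (fun k => Cmod (a k) ^ 2 * beta k) SA ->
  Cmod z < 1 -> is_series (pterm (subst_coeffs c a) z) V ->
  is_series (fun k => (Cmod z ^ 2) ^ k / beta k) Z -> 0 < t ->
  Cmod (Cminus V (csum (pterm a (phi z)) L)) <=
  t / 2 * (K0 * (SA - sum_f_R0 (fun k => Cmod (a k) ^ 2 * beta k) L)) + Z / (2 * t).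
Proof.
intros Hs HSA Hz HV HZ Ht. pose proof Hs as [HPS [_ Hc0]]. pose proof ess_decr_const_ge1 as HK.
set (e := fun k => Cminus (subst_coeffs c a k) (horner c a L k)).
assert (He : is_series (pterm e z) (Cminus V (csum (pterm a (phi z)) L))).
{ eapply is_series_ext; [|exact (is_series_minus _ _ _ _ HV (disk_pseries_horner c phi HPS L a z Hz))].
  intros n. unfold e, pterm. simpl. change plus with Cplus. change opp with Copp. ring. }
replace (Cminus V (csum (pterm a (phi z)) L))
  with (Cminus (Cminus V (csum (pterm a (phi z)) L)) (RtoC 0)) by ring.
apply (lim_bound_C _ _ _ _ 0 He). intros n _.
replace (Cminus (csum (pterm e z) n) (RtoC 0)) with (csum (pterm e z) n) by ring.
eapply Rle_trans; [apply (H2_partial_eval_bound beta e z Z t n beta_pos Ht HZ)|].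
apply Rplus_le_compat_r, Rmult_le_compat_l; [lra|].
rewrite (sum_eq _ (fun k => Cmod (subst_coeffs c (fun m => Cminus (a m) (truncate L a m)) k) ^ 2 * beta k))
  by (intros k _; unfold e; rewrite subst_minus_horner by auto; reflexivity).
eapply Rle_trans; [apply (subst_weighted_bound c phi Hs)|].
apply Rmult_le_compat_l; [lra|]. apply truncation_tail_bound, HSA.
Qed.

(* The sequence [subst_coeffs c a] really is the Taylor coefficient sequence
   of [f o phi]: let first [L] and then the parameter [t = 1/x] grow. *)
Lemma subst_coeffs_value c phi a z V W :
  zero_fixing_symbol c phi -> inH2 beta a -> Cmod z < 1 ->
  is_series (pterm (subst_coeffs c a) z) V -> is_series (pterm a (phi z)) W -> V = W.
Proof.
intros Hs [SA HSA] Hz HV HW. pose proof ess_decr_const_ge1 as HK.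
assert (Hz2 : 0 <= Cmod z ^ 2 < 1) by (split; [apply pow2_ge_0|pose proof (Cmod_ge_0 z); nra]).
pose proof (Series_correct _ (weight_dual_summable beta beta_ok _ Hz2)) as HZ.
set (Z := Series (fun n => (Cmod z ^ 2) ^ n / beta n)) in *.
assert (z0 : forall k, 0 <= (Cmod z ^ 2) ^ k / beta k).
{ intros k. unfold Rdiv. apply Rmult_le_pos; [apply pow_le; lra|left; apply Rinv_0_lt_compat, beta_pos]. }
assert (Z0 : 0 <= Z) by (eapply Rle_trans; [apply (z0 0%nat)|apply (term_le_series _ _ z0 HZ)]).
assert (g0 : forall k, 0 <= Cmod (a k) ^ 2 * beta k)
  by (intros k; apply Rmult_le_pos; [apply pow2_ge_0|left; apply beta_pos]).
apply Ceq_minus, Cmod_eq_0, Rle_antisym; [|apply Cmod_ge_0].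
apply (le_of_le_plus_small _ _ (K0 / 2 + Z / 2 + 1)); [lra|]. intros x Hx.
destruct (series_partial_conv _ _ HSA (x ^ 2) ltac:(nra)) as [L1 HL1].
destruct (csum_conv_C _ _ HW x ltac:(lra)) as [L2 HL2].
set (L := max L1 L2). specialize (HL1 L ltac:(lia)). specialize (HL2 L ltac:(lia)).
pose proof (subst_value_approx c phi a SA z V Z L (/ x) Hs HSA Hz HV HZ ltac:(apply Rinv_0_lt_compat; lra)) as Bnd.
pose proof (series_partial_le _ _ g0 HSA L).
set (tau := SA - sum_f_R0 (fun k => Cmod (a k) ^ 2 * beta k) L) in *.
assert (Htau : 0 <= tau <= x ^ 2) by (unfold tau; rewrite Rabs_left1 in HL1; lra).
assert (E1 : / x / 2 * (K0 * tau) <= K0 / 2 * x).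
{ apply (Rmult_le_reg_l x); [lra|]. replace (x * (/ x / 2 * (K0 * tau))) with (K0 / 2 * tau) by (field; lra). nra. }
assert (E2 : Z / (2 * / x) = Z / 2 * x) by (field; lra).
replace (Cminus V W) with (Cplus (Cminus V (csum (pterm a (phi z)) L)) (Cminus (csum (pterm a (phi z)) L) W))
  by ring.
eapply Rle_trans; [apply Cmod_triangle|]. lra.
Qed.

End EssentiallyDecreasing.

Lemma ess_decreasing_bounded beta K0 : weight_ok beta ->
  (forall m n, (n <= m)%nat -> beta m <= K0 * beta n) ->
  forall phi, symbol phi -> phi (RtoC 0) = RtoC 0 -> Cphi_bounded_by beta phi (sqrt K0).
Proof.
intros Hw Hdec phi Hsym H0 a Ha.
destruct (symbol_coeffs phi Hsym H0) as [c Hs].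
destruct (subst_inH2 beta K0 Hw Hdec c phi a Hs Ha) as [Hb Hnorm].
exists (subst_coeffs c a). split; [|split; assumption].
intros z Hz. unfold in_disk in Hz.
assert (Hpz : Cmod (phi z) < 1) by (apply (proj1 (proj2 Hsym)); exact Hz).
destruct (inH2_pseries beta a (phi z) Hw Ha Hpz) as [W HW].
destruct (inH2_pseries beta _ z Hw Hb Hz) as [V HV].
exists W. split; apply is_pseries_pterm; [exact HW|].
rewrite <- (subst_coeffs_value beta K0 Hw Hdec c phi a z V W Hs Ha Hz HV HW). exact HV.
Qed.

(** Necessity: a uniform bound forces [beta] to be essentially decreasing. *)

(* A bounded [C_phi] maps [z^n] to [phi^n]; comparing one coefficient of
   [phi^n] with the norm bound gives [|[z^m] phi^n|^2 beta_m <= M^2 beta_n]. *)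
Lemma monomial_image_bound beta M phi c n m :
  (forall k, 0 < beta k) -> symbol phi -> disk_pseries c phi ->
  Cphi_bounded_by beta phi M ->
  Cmod (cpow_coeffs c n m) ^ 2 * beta m <= M ^ 2 * beta n.
Proof.
intros Hpos Hsym Hc HM.
assert (g0 : forall (x : nat -> C) j, 0 <= Cmod (x j) ^ 2 * beta j)
  by (intros x j; apply Rmult_le_pos; [apply pow2_ge_0|left; auto]).
assert (He : is_series (fun j => Cmod (monomial n j) ^ 2 * beta j) (beta n)).
{ replace (beta n) with (sum_f_R0 (fun j => Cmod (monomial n j) ^ 2 * beta j) n).
  - apply is_series_fin_R. intros j Hj. unfold monomial.
    destruct (Nat.eqb_spec j n); [lia|]. rewrite Cmod_0. ring.
  - destruct n; simpl; unfold monomial; rewrite ?Nat.eqb_refl, Cmod_1; [ring|].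
    rewrite (sum_eq _ (fun _ => 0)), sum_cte; [ring|].
    intros i Hi. destruct (Nat.eqb_spec i (S n)); [lia|]. rewrite Cmod_0. ring. }
destruct (HM (monomial n) (ex_intro _ _ He)) as [b [Hcc [Hb Hnorm]]].
assert (Hbphi : disk_pseries b (fun z => Cpow (phi z) n)).
{ intros z Hz. destruct (Hcc z Hz) as [w [H1 H2]].
  assert (Hpz : Cmod (phi z) < 1) by (apply (proj1 (proj2 Hsym)); exact Hz).
  apply is_pseries_pterm in H1, H2.
  rewrite <- (is_series_C_unique _ _ _ H1 (disk_pseries_monomial n (phi z) Hpz)). exact H2. }
rewrite <- (disk_pseries_unique _ _ _ Hbphi (disk_pseries_cpow _ _ Hc n) m).
unfold H2norm in Hnorm. rewrite (is_series_unique _ _ He) in Hnorm.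
pose proof (Series_correct _ Hb) as HSb.
set (Sb := Series (fun j => Cmod (b j) ^ 2 * beta j)) in *.
pose proof (term_le_series _ _ (g0 b) HSb m) as Tm.
assert (Sb0 : 0 <= Sb) by (pose proof (g0 b m); lra).
enough (Sb <= M ^ 2 * beta n) by lra.
rewrite <- (sqrt_sqrt Sb) by auto. pose proof (sqrt_pos Sb).
replace (M ^ 2 * beta n) with ((M * sqrt (beta n)) ^ 2)
  by (rewrite Rpow_mult_distr, pow2_sqrt; [reflexivity|left; auto]).
rewrite <- Rsqr_pow2. unfold Rsqr. apply Rmult_le_compat; auto.
Qed.


Definition test_coeffs (al bt : R) (k : nat) (j : nat) : C :=
  Cplus (Cmult (RtoC al) (monomial 1 j)) (Cmult (RtoC bt) (monomial (S k) j)).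

Definition test_symbol (al bt : R) (k : nat) (z : C) : C :=
  Cplus (Cmult (RtoC al) z) (Cmult (RtoC bt) (Cpow z (S k))).

Lemma disk_pseries_test al bt k : disk_pseries (test_coeffs al bt k) (test_symbol al bt k).
Proof.
eapply disk_pseries_ext;
  [| |apply disk_pseries_plus; apply disk_pseries_scal; apply disk_pseries_monomial];
  [reflexivity|].
intros z _. unfold test_symbol. simpl. f_equal. f_equal. ring.
Qed.

Lemma conv_test al bt k d i : conv (test_coeffs al bt k) d i =
  Cplus (if Nat.leb 1 i then Cmult (RtoC al) (d (i - 1)%nat) else RtoC 0)
        (if Nat.leb (S k) i then Cmult (RtoC bt) (d (i - S k)%nat) else RtoC 0).
Proof.
unfold test_coeffs. rewrite conv_plus_l, !conv_scal_l, !conv_monomial_l.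
destruct (Nat.leb 1 i); destruct (Nat.leb (S k) i); ring.
Qed.

Lemma cpow_test_diag al bt k (Hk : (1 <= k)%nat) j :
  cpow_coeffs (test_coeffs al bt k) j j = Cpow (RtoC al) j.
Proof.
induction j; [reflexivity|].
simpl cpow_coeffs. rewrite conv_test. replace (S j - 1)%nat with j by lia. rewrite IHj.
destruct (Nat.leb_spec 1 (S j)); [|lia].
destruct (Nat.leb_spec (S k) (S j)).
- rewrite cpow_coeffs_low; [simpl; ring| |lia]. unfold test_coeffs, monomial. simpl. ring.
- simpl. ring.
Qed.

(* The coefficient [[z^(j+k)] phi^j = j al^(j-1) bt]: exactly one factor
   contributes [bt z^(k+1)]. *)
Lemma cpow_test_shifted al bt k (Hk : (1 <= k)%nat) j :
  cpow_coeffs (test_coeffs al bt k) j (j + k)%nat =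
  Cmult (RtoC (INR j)) (Cmult (Cpow (RtoC al) (j - 1)) (RtoC bt)).
Proof.
induction j.
- simpl. unfold const_seq. destruct (Nat.eqb_spec k 0); [lia|]. simpl. ring.
- simpl cpow_coeffs. rewrite conv_test. replace (S (j + k) - 1)%nat with (j + k)%nat by lia.
  replace (S (j + k) - S k)%nat with j by lia. rewrite IHj, (cpow_test_diag al bt k Hk).
  destruct (Nat.leb_spec 1 (S (j + k))); [|lia]. destruct (Nat.leb_spec (S k) (S (j + k))); [|lia].
  rewrite S_INR. destruct j.
  + simpl. rewrite RtoC_plus. ring.
  + replace (S (S j) - 1)%nat with (S j) by lia. replace (S j - 1)%nat with j by lia.
    simpl. rewrite RtoC_plus. ring.
Qed.

Lemma test_symbol_is_symbol al bt k : 0 <= al -> 0 < bt -> al + bt = 1 -> (1 <= k)%nat ->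
  symbol (test_symbol al bt k) /\ test_symbol al bt k (RtoC 0) = RtoC 0.
Proof.
intros Hal Hbt Hab Hk. set (phi := test_symbol al bt k).
assert (Hcontr : forall z, Cmod z < 1 -> Cmod (phi z) <= Cmod z).
{ intros z Hz. unfold phi, test_symbol. eapply Rle_trans; [apply Cmod_triangle|].
  rewrite !Cmod_mult, !Cmod_R, Cmod_pow, !Rabs_right by lra.
  assert (Cmod z ^ S k <= Cmod z ^ 1) by (apply pow_decr_exp; [pose proof (Cmod_ge_0 z); lra|lia]).
  simpl in *. nra. }
assert (Hre : forall x, phi (RtoC x) = RtoC (al * x + bt * x ^ S k)).
{ intros x. unfold phi, test_symbol. rewrite RtoC_plus, !RtoC_mult, RtoC_pow. reflexivity. }
split; [split; [|split]|].
- exists (test_coeffs al bt k). intros z Hz. apply is_pseries_pterm, disk_pseries_test, Hz.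
- intros z Hz. unfold in_disk in *. specialize (Hcontr z Hz). lra.
- exists (RtoC 0), (RtoC (1/2)). unfold in_disk. rewrite Cmod_0, Cmod_R, Rabs_right by lra.
  split; [lra|split; [lra|]]. rewrite !Hre. intros E. apply RtoC_inj in E.
  rewrite pow_i in E by lia. assert (0 < (1/2) ^ S k) by (apply pow_lt; lra). nra.
- rewrite Hre, pow_i by lia. f_equal. ring.
Qed.

(* [(1 - 1/n)^(n-1) >= 1/e >= 1/3]. *)
Lemma lower_third n : (1 <= n)%nat -> 1 / 3 <= (1 - 1 / INR n) ^ (n - 1).
Proof.
intros Hn. destruct n as [|[|m]]; [lia|simpl; lra|].
set (p := S m). replace (S p - 1)%nat with p by lia.
assert (Hp : 1 <= INR p) by (apply (le_INR 1); unfold p; lia).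
assert (Hq : 0 < 1 / INR p) by (apply Rdiv_lt_0_compat; lra).
replace (INR (S p)) with (INR p + 1) by (rewrite S_INR; ring).
replace (1 - 1 / (INR p + 1)) with (/ (1 + 1 / INR p)) by (field; lra).
rewrite pow_inv.
assert (H1 : (1 + 1 / INR p) ^ p <= 3).
{ eapply Rle_trans; [apply pow_incr; split; [lra|left; apply exp_ineq1; lra]|].
  assert (E : forall x q, exp x ^ q = exp (INR q * x)).
  { intros x q. induction q; [simpl; rewrite Rmult_0_l, exp_0; reflexivity|].
    rewrite S_INR. simpl pow. rewrite IHq, <- exp_plus. f_equal. ring. }
  rewrite E. replace (INR p * (1 / INR p)) with 1 by (field; lra). apply exp_le_3. }
assert (H2 : 0 < (1 + 1 / INR p) ^ p) by (apply pow_lt; lra).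
apply (Rmult_le_reg_r ((1 + 1 / INR p) ^ p)); auto.
rewrite Rinv_l by lra. lra.
Qed.

(* Testing [C_phi] with [phi(z) = (1 - 1/n) z + z^(k+1)/n] on [z^n]: the
   coefficient of [z^(n+k)] in [phi^n] is [(1-1/n)^(n-1) >= 1/3]. *)
Lemma beta_increase_bound beta M : weight_ok beta ->
  (forall phi, symbol phi -> phi (RtoC 0) = RtoC 0 -> Cphi_bounded_by beta phi M) ->
  forall n m, (1 <= n)%nat -> (n < m)%nat -> beta m <= 9 * M ^ 2 * beta n.
Proof.
intros [Hpos _] HM n m Hn Hnm.
set (k := (m - n)%nat).
assert (HnR : 1 <= INR n) by (apply (le_INR 1); lia).
set (al := 1 - 1 / INR n). set (bt := 1 / INR n).
assert (Hbt1 : bt <= 1)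
  by (unfold bt, Rdiv; rewrite Rmult_1_l, <- Rinv_1; apply Rinv_le_contravar; lra).
assert (Hbt : 0 < bt) by (unfold bt; apply Rdiv_lt_0_compat; lra).
destruct (test_symbol_is_symbol al bt k ltac:(unfold al; fold bt; lra) Hbt ltac:(unfold al, bt; ring)
            ltac:(unfold k; lia)) as [Hsym H0].
pose proof (monomial_image_bound beta M _ _ n m Hpos Hsym (disk_pseries_test al bt k) (HM _ Hsym H0)) as B.
replace m with (n + k)%nat in B by (unfold k; lia).
rewrite cpow_test_shifted in B by (unfold k; lia).
replace (Cmult (RtoC (INR n)) (Cmult (Cpow (RtoC al) (n - 1)) (RtoC bt)))
  with (RtoC (al ^ (n - 1))) in B
  by (rewrite <- RtoC_pow, <- !RtoC_mult; f_equal; unfold bt; field; lra).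
replace (n + k)%nat with m in B by (unfold k; lia).
rewrite Cmod_R, Rabs_right in B by (apply Rle_ge, pow_le; unfold al; fold bt; lra).
pose proof (lower_third n Hn) as L3. fold al bt in L3.
assert (1 / 9 <= (al ^ (n - 1)) ^ 2)
  by (replace (1/9) with ((1/3)^2) by field; apply pow_incr; lra).
pose proof (Hpos m). nra.
Qed.

(* The ratios [beta_m / beta_n] for [n >= 1] are controlled by the previous
   lemma, and the remaining ratios [beta_m / beta_0] through [beta_1 / beta_0]. *)
Lemma bounded_ess_decreasing beta : weight_ok beta ->
  (exists M, forall phi, symbol phi -> phi (RtoC 0) = RtoC 0 -> Cphi_bounded_by beta phi M) ->
  ess_decreasing beta.
Proof.
intros Hw [M HM]. pose proof Hw as [Hpos _].
pose proof (beta_increase_bound beta M Hw HM) as KB.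
assert (HM2 : 0 <= 9 * M ^ 2) by (pose proof (pow2_ge_0 M); lra).
set (r := beta 1%nat / beta 0%nat).
assert (Hr : 0 < r) by (apply Rdiv_lt_0_compat; auto).
assert (E : r * beta 0%nat = beta 1%nat) by (unfold r; field; apply Rgt_not_eq, Hpos).
exists (1 + 9 * M ^ 2 + r + 9 * M ^ 2 * r). split; [nra|].
intros m n Hnm. pose proof (Hpos n). pose proof (Hpos m). pose proof (Hpos 0%nat).
assert (0 <= 9 * M ^ 2 * r) by nra.
destruct (Nat.eq_dec m n) as [->|Hne]; [nra|].
destruct n as [|n].
- destruct (Nat.eq_dec m 1) as [->|Hm1]; [nra|].
  specialize (KB 1%nat m ltac:(lia) ltac:(lia)). nra.
- specialize (KB (S n) m ltac:(lia) ltac:(lia)). nra.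
Qed.

Theorem mainTheorem5 (beta : nat -> R) :
  weight_ok beta ->
  ((exists M : R, forall phi : C -> C,
       symbol phi -> phi (RtoC 0) = RtoC 0 -> Cphi_bounded_by beta phi M)
   <-> ess_decreasing beta).
Proof.
intros Hw. split.
- apply bounded_ess_decreasing, Hw.
- intros [K0 [_ Hdec]]. exists (sqrt K0). apply (ess_decreasing_bounded beta K0 Hw Hdec).
Qed.
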